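(* Let $(W,\cdot,\iota)$ be any constraint domain. Let $\Gamma$ be a set and $\Delta$ a multiset of HyLL judgements, and $C@w$ a judgement, such that $\Gamma;\Delta\Rightarrow C@w$ is derivable in the (unfocused) HyLL sequent calculus. Let $\Gamma^-$ be obtained by replacing each $A@u\in\Gamma$ by $A^-@u$ for some negative polarization $A^-$ of $A$, let $C^-$ be a negative polarization of $C$, and let $\Delta^+$ be obtained by replacing each $A@u\in\Delta$ by $A^+@u$ for some positive polarization $A^+$ of $A$. Write $!\Gamma^-$ for the collection of judgements $!N@u$ with $N@u\in\Gamma^-$. Then the active sequent $\cdot;\cdot;\ !\Gamma^-,\Delta^+\Rightarrow C^-@w;\cdot$ is derivable in the focused HyLL calculus.
   Context: HyLL: worlds are elements of a monoid $(W,\cdot,\iota)$ (world expressions built from world variables and $\cdot$, up to monoid equations); terms are first-order; world and term variables never mix; $\alpha$ ranges over variables of either kind, $\tau$ over terms/worlds, $[\tau/\alpha]$ is capture-avoiding substitution. Unpolarized HyLL propositions: $A ::= a\,\vec t\mid A\otimes B\mid\mathbf1\mid A\multimap B\mid A\&B\mid\top\mid A\oplus B\mid\mathbf0\mid !A\mid\forall\alpha.A\mid\exists\alpha.A\mid(A\ \mathsf{at}\ w)\mid\downarrow u.A$; the unfocused HyLL sequent calculus has sequents $\Gamma;\Delta\Rightarrow C@w$ ($\Gamma$ a set, $\Delta$ a multiset of judgements $A@u$) with the standard intuitionistic linear rules (init on atoms at the same world, copy from $\Gamma$ to $\Delta$, left/right rules for each connective, with left rules acting on a hypothesis $A@u$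 at its own world $u$ and right rules keeping the succedent world $w$, and $!$R requiring empty $\Delta$), plus $\mathsf{at}$R: from $\Gamma;\Delta\Rightarrow A@u$ infer $\Gamma;\Delta\Rightarrow(A\ \mathsf{at}\ u)@v$; $\mathsf{at}$L: from $\Gamma;\Delta,A@u\Rightarrow C@w$ infer $\Gamma;\Delta,(A\ \mathsf{at}\ u)@v\Rightarrow C@w$; $\downarrow$R: from $\Gamma;\Delta\Rightarrow[w/u]A@w$ infer $\Gamma;\Delta\Rightarrow\downarrow u.A@w$; $\downarrow$L: from $\Gamma;\Delta,[v/u]A@v\Rightarrow C@w$ infer $\Gamma;\Delta,\downarrow u.A@v\Rightarrow C@w$. Polarized syntax: atomic predicates are each assigned a polarity, positive atoms $p\,\vec t$ and negative atoms $n\,\vec t$. Positive $P,Q ::= p\,\vec t\mid P\otimes Q\mid\mathbf1\mid P\oplus Q\mid\mathbf0\mid !N\mid\exists\alpha.P\mid\downarrow u.P\mid(P\ \mathsf{at}\ w)\mid\mathsf{pos}\,N$; negative $N,M ::= n\,\vec t\mid N\&M\mid\top\mid P\multimap N\mid\forall\alpha.N\mid\downarrow u.N\mid(N\ \mathsf{at}\ w)\mid\mathsf{neg}\,P$. A positive (resp. negative) polarization of $A$ is a positive (resp. negative) polarized proposition that becomes $A$ when all shifts $\mathsf{pos},\mathsf{neg}$ are deleted. Focused sequents: active $\Gamma;\Delta;\Omega\Rightarrow\cdot;P@w$ and $\Gamma;\Delta;\Omega\Rightarrow N@w;\cdot$; left-focused $\Gamma;\Delta;[N@u]\Rightarrow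 P@w$; right-focused $\Gamma;\Delta\Rightarrow[P@w]$. $\Gamma$ (set), $\Delta$ (multiset) contain negative judgements; $\Omega$ (multiset) positive judgements. Below $\mathcal L$ denotes $\Gamma;\Delta;\Omega$ and $\mathcal R$ denotes either $\cdot;Q@w$ or $N@w;\cdot$; ''$X\Longrightarrow Y$'' means premises $X$ give conclusion $Y$. Focused rules: li: $\Gamma;\cdot;[n\,\vec t@w]\Rightarrow\mathsf{pos}(n\,\vec t)@w$. $\mathsf{neg}$L: $\Gamma;\Delta;P@u\Rightarrow\cdot;Q@w\Longrightarrow\Gamma;\Delta;[\mathsf{neg}P@u]\Rightarrow Q@w$. $\mathsf{pos}$R: $\Gamma;\Delta;\cdot\Rightarrow N@w;\cdot\Longrightarrow\Gamma;\Delta\Rightarrow[\mathsf{pos}N@w]$. $\&$L$_i$: $\Gamma;\Delta;[N_i@u]\Rightarrow Q@w\Longrightarrow\Gamma;\Delta;[N_1\&N_2@u]\Rightarrow Q@w$. $\multimap$L: $\Gamma;\Delta\Rightarrow[P@u]$ and $\Gamma;\Xi;[N@u]\Rightarrow Q@w\Longrightarrow\Gamma;\Delta,\Xi;[P\multimap N@u]\Rightarrow Q@w$. $\forall$L: $\Gamma;\Delta;[[\tau/\alpha]N@u]\Rightarrow Q@w\Longrightarrow\Gamma;\Delta;[\forall\alpha.N@u]\Rightarrow Q@w$. $\downarrow$LF: $\Gamma;\Delta;[[v/u]N@v]\Rightarrow Q@w\Longrightarrow\Gamma;\Delta;[\downarrow u.N@v]\Rightarrow Q@w$. $\mathsf{at}$LF: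 $\Gamma;\Delta;[N@u]\Rightarrow Q@w\Longrightarrow\Gamma;\Delta;[(N\ \mathsf{at}\ u)@v]\Rightarrow Q@w$. ri: $\Gamma;\mathsf{neg}(p\,\vec t)@w\Rightarrow[p\,\vec t@w]$. $\otimes$R: $\Gamma;\Delta\Rightarrow[P@w]$ and $\Gamma;\Xi\Rightarrow[Q@w]\Longrightarrow\Gamma;\Delta,\Xi\Rightarrow[P\otimes Q@w]$. $\oplus$R$_i$: $\Gamma;\Delta\Rightarrow[P_i@w]\Longrightarrow\Gamma;\Delta\Rightarrow[P_1\oplus P_2@w]$. $\exists$R: $\Gamma;\Delta\Rightarrow[[\tau/\alpha]P@w]\Longrightarrow\Gamma;\Delta\Rightarrow[\exists\alpha.P@w]$. $!$R: $\Gamma;\cdot;\cdot\Rightarrow N@w;\cdot\Longrightarrow\Gamma;\cdot\Rightarrow[!N@w]$. $\downarrow$RF: $\Gamma;\Delta\Rightarrow[[w/u]P@w]\Longrightarrow\Gamma;\Delta\Rightarrow[\downarrow u.P@w]$. $\mathsf{at}$RF: $\Gamma;\Delta\Rightarrow[P@u]\Longrightarrow\Gamma;\Delta\Rightarrow[(P\ \mathsf{at}\ u)@w]$. $\mathbf1$R: $\Gamma;\cdot\Rightarrow[\mathbf1@w]$. Active rules: $\otimes$L: $\mathcal L,P@u,Q@u\Rightarrow\mathcal R\Longrightarrow\mathcal L,P\otimes Q@u\Rightarrow\mathcal R$. $\mathbf1$L: $\mathcal L\Rightarrow\mathcal R\Longrightarrow\mathcal L,\mathbf1@u\Rightarrow\mathcal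 R$. $\oplus$L: $\mathcal L,P@u\Rightarrow\mathcal R$ and $\mathcal L,Q@u\Rightarrow\mathcal R\Longrightarrow\mathcal L,P\oplus Q@u\Rightarrow\mathcal R$. $\downarrow$LA: $\mathcal L,[v/u]P@v\Rightarrow\mathcal R\Longrightarrow\mathcal L,\downarrow u.P@v\Rightarrow\mathcal R$. $\mathsf{at}$LA: $\mathcal L,P@u\Rightarrow\mathcal R\Longrightarrow\mathcal L,(P\ \mathsf{at}\ u)@v\Rightarrow\mathcal R$. $\exists$L: $\mathcal L,P@u\Rightarrow\mathcal R\Longrightarrow\mathcal L,\exists\alpha.P@u\Rightarrow\mathcal R$ ($\alpha$ fresh). $!$L: $\Gamma,N@u;\Delta;\Omega\Rightarrow\mathcal R\Longrightarrow\Gamma;\Delta;\Omega,!N@u\Rightarrow\mathcal R$. $\mathsf{pos}$L: $\Gamma;\Delta,N@w;\Omega\Rightarrow\mathcal R\Longrightarrow\Gamma;\Delta;\Omega,\mathsf{pos}N@w\Rightarrow\mathcal R$. lp: $\Gamma;\Delta,\mathsf{neg}(p\,\vec t)@w;\Omega\Rightarrow\mathcal R\Longrightarrow\Gamma;\Delta;\Omega,p\,\vec t@w\Rightarrow\mathcal R$. $\mathbf0$L: $\mathcal L,\mathbf0@u\Rightarrow\mathcal R$. $\&$R: $\mathcal L\Rightarrow M@w;\cdot$ and $\mathcal L\Rightarrow N@w;\cdot\Longrightarrow\mathcal L\Rightarrow M\&N@w;\cdot$. $\top$R: $\mathcal L\Rightarrow\top@w;\cdot$. $\multimap$R: $\mathcal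 L,P@w\Rightarrow N@w;\cdot\Longrightarrow\mathcal L\Rightarrow P\multimap N@w;\cdot$. $\downarrow$RA: $\mathcal L\Rightarrow[w/u]N@w;\cdot\Longrightarrow\mathcal L\Rightarrow\downarrow u.N@w;\cdot$. $\mathsf{at}$RA: $\mathcal L\Rightarrow N@u;\cdot\Longrightarrow\mathcal L\Rightarrow(N\ \mathsf{at}\ u)@w;\cdot$. $\forall$R: $\mathcal L\Rightarrow N@u;\cdot\Longrightarrow\mathcal L\Rightarrow\forall\alpha.N@u;\cdot$ ($\alpha$ fresh). $\mathsf{neg}$R: $\mathcal L\Rightarrow\cdot;P@w\Longrightarrow\mathcal L\Rightarrow\mathsf{neg}P@w;\cdot$. rp: $\mathcal L\Rightarrow\cdot;\mathsf{pos}(n\,\vec t)@w\Longrightarrow\mathcal L\Rightarrow n\,\vec t@w;\cdot$. Decisions: lf: $\Gamma;\Delta;[N@u]\Rightarrow Q@w\Longrightarrow\Gamma;\Delta,N@u;\cdot\Rightarrow\cdot;Q@w$, provided $N$ is not of the form $\mathsf{neg}(p\,\vec t)$. cplf: $\Gamma,N@u;\Delta;[N@u]\Rightarrow Q@w\Longrightarrow\Gamma,N@u;\Delta;\cdot\Rightarrow\cdot;Q@w$. rf: $\Gamma;\Delta\Rightarrow[P@w]\Longrightarrow\Gamma;\Delta;\cdot\Rightarrow\cdot;P@w$, provided $P$ is not of the form $\mathsf{pos}(n\,\vec t)$. *)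

(* HyLL: unfocused and focused sequent calculi.
   Variables are de Bruijn indices; term variables and world variables live
   in two separate index spaces (they never mix). *)
From Stdlib Require Import List Permutation.
Import ListNotations.
Set Implicit Arguments.
Unset Strict Implicit.

Record constraint_domain := {
  wcar : Type;
  wop : wcar -> wcar -> wcar;
  wunit : wcar;
  wop_assoc : forall a b c, wop (wop a b) c = wop a (wop b c);
  wop_unitl : forall a, wop wunit a = a;
  wop_unitr : forall a, wop a wunit = a }.

Definition scons (A : Type) (a : A) (f : nat -> A) (n : nat) : A :=
  match n with 0 => a | S m => f m end.

Section Terms.
Variable Fn : Type.

Inductive term : Type :=
| TVar (n : nat)
| TApp (f : Fn) (ts : list term).

Fixpoint tsub (s : nat -> term) (t : term) : term :=
  match t with
  | TVar n => s n
  | TApp f ts => TApp f (map (tsub s) ts)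
  end.

Definition up_t (s : nat -> term) : nat -> term :=
  scons (TVar 0) (fun m => tsub (fun k => TVar (S k)) (s m)).
End Terms.
Arguments TVar {Fn} n.
Arguments TApp {Fn} f ts.

(* World expressions: world variables, constants of W, iota, and dot,
   considered up to the monoid equations (weq). *)
Section Worlds.
Variable CD : constraint_domain.

Inductive wexp : Type :=
| WVar (n : nat)
| WConst (c : wcar CD)
| WIota
| WDot (u v : wexp).

Fixpoint wsub (s : nat -> wexp) (u : wexp) : wexp :=
  match u with
  | WVar n => s n
  | WConst c => WConst c
  | WIota => WIota
  | WDot u v => WDot (wsub s u) (wsub s v)
  end.

Definition up_w (s : nat -> wexp) : nat -> wexp :=
  scons (WVar 0) (fun m => wsub (fun k => WVar (S k)) (s m)).

Definition wshift (u : wexp) : wexp := wsub (fun k => WVar (S k)) u.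

Inductive weq : wexp -> wexp -> Prop :=
| weq_refl u : weq u u
| weq_sym u v : weq u v -> weq v u
| weq_trans u v x : weq u v -> weq v x -> weq u x
| weq_dot u u' v v' : weq u u' -> weq v v' -> weq (WDot u v) (WDot u' v')
| weq_assoc u v x : weq (WDot (WDot u v) x) (WDot u (WDot v x))
| weq_unitl u : weq (WDot WIota u) u
| weq_unitr u : weq (WDot u WIota) u
| weq_const a b : weq (WDot (WConst a) (WConst b)) (WConst (wop a b))
| weq_iota : weq WIota (WConst (wunit CD)).
End Worlds.
Arguments WVar {CD} n.
Arguments WConst {CD} c.
Arguments WIota {CD}.
Arguments WDot {CD} u v.

(* Unpolarized HyLL propositions.  AllT/ExT bind a term variable,
   AllW/ExW/Down bind a world variable (index 0). *)
Section Props.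
Variables (CD : constraint_domain) (Fn Pr : Type).

Inductive prop : Type :=
| Atom (a : Pr) (ts : list (term Fn))
| Tensor (A B : prop)
| One
| Lolli (A B : prop)
| With (A B : prop)
| Top
| Plus (A B : prop)
| Zero
| Bang (A : prop)
| AllT (A : prop)
| AllW (A : prop)
| ExT (A : prop)
| ExW (A : prop)
| At (A : prop) (w : wexp CD)
| Down (A : prop).

Fixpoint psub (st : nat -> term Fn) (sw : nat -> wexp CD) (A : prop) : prop :=
  match A with
  | Atom a ts => Atom a (map (tsub st) ts)
  | Tensor A B => Tensor (psub st sw A) (psub st sw B)
  | One => One
  | Lolli A B => Lolli (psub st sw A) (psub st sw B)
  | With A B => With (psub st sw A) (psub st sw B)
  | Top => Top
  | Plus A B => Plus (psub st sw A) (psub st sw B)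
  | Zero => Zero
  | Bang A => Bang (psub st sw A)
  | AllT A => AllT (psub (up_t st) sw A)
  | AllW A => AllW (psub st (up_w sw) A)
  | ExT A => ExT (psub (up_t st) sw A)
  | ExW A => ExW (psub st (up_w sw) A)
  | At A u => At (psub st sw A) (wsub sw u)
  | Down A => Down (psub st (up_w sw) A)
  end.

Definition tinst (t : term Fn) (A : prop) : prop := psub (scons t (@TVar Fn)) (@WVar CD) A.
Definition winst (u : wexp CD) (A : prop) : prop := psub (@TVar Fn) (scons u (@WVar CD)) A.
Definition tshift (A : prop) : prop := psub (fun k => TVar (S k)) (@WVar CD) A.
Definition wshiftp (A : prop) : prop := psub (@TVar Fn) (fun k => WVar (S k)) A.

Definition hyp : Type := (prop * wexp CD)%type.
Definition tshift_ctx (G : list hyp) : list hyp :=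
  map (fun h => (tshift (fst h), snd h)) G.
Definition wshift_ctx (G : list hyp) : list hyp :=
  map (fun h => (wshiftp (fst h), wshift (snd h))) G.

(* Unfocused HyLL sequent calculus  G ; D ==> C @ w.
   G (unrestricted, a set) and D (linear, a multiset) are lists; the
   multiset reading of D is given by the exchange rule u_perm. *)
Inductive useq : list hyp -> list hyp -> prop -> wexp CD -> Prop :=
| u_perm G D D' C w : Permutation D D' -> useq G D C w -> useq G D' C w
| u_init G a ts u w : weq u w -> useq G [(Atom a ts, u)] (Atom a ts) w
| u_copy G D A u C w : In (A, u) G -> useq G ((A, u) :: D) C w -> useq G D C w
| u_tensorR G D1 D2 A B w :
    useq G D1 A w -> useq G D2 B w -> useq G (D1 ++ D2) (Tensor A B) w
| u_tensorL G D A B u C w :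
    useq G ((A, u) :: (B, u) :: D) C w -> useq G ((Tensor A B, u) :: D) C w
| u_oneR G w : useq G [] One w
| u_oneL G D u C w : useq G D C w -> useq G ((One, u) :: D) C w
| u_lolliR G D A B w : useq G ((A, w) :: D) B w -> useq G D (Lolli A B) w
| u_lolliL G D1 D2 A B u C w :
    useq G D1 A u -> useq G ((B, u) :: D2) C w ->
    useq G ((Lolli A B, u) :: D1 ++ D2) C w
| u_withR G D A B w : useq G D A w -> useq G D B w -> useq G D (With A B) w
| u_withL1 G D A B u C w :
    useq G ((A, u) :: D) C w -> useq G ((With A B, u) :: D) C w
| u_withL2 G D A B u C w :
    useq G ((B, u) :: D) C w -> useq G ((With A B, u) :: D) C w
| u_topR G D w : useq G D Top w
| u_plusR1 G D A B w : useq G D A w -> useq G D (Plus A B) w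
| u_plusR2 G D A B w : useq G D B w -> useq G D (Plus A B) w
| u_plusL G D A B u C w :
    useq G ((A, u) :: D) C w -> useq G ((B, u) :: D) C w ->
    useq G ((Plus A B, u) :: D) C w
| u_zeroL G D u C w : useq G ((Zero, u) :: D) C w
| u_bangR G A w : useq G [] A w -> useq G [] (Bang A) w
| u_bangL G D A u C w : useq ((A, u) :: G) D C w -> useq G ((Bang A, u) :: D) C w
| u_allTR G D A w :
    useq (tshift_ctx G) (tshift_ctx D) A w -> useq G D (AllT A) w
| u_allWR G D A w :
    useq (wshift_ctx G) (wshift_ctx D) A (wshift w) -> useq G D (AllW A) w
| u_allTL G D A t u C w :
    useq G ((tinst t A, u) :: D) C w -> useq G ((AllT A, u) :: D) C w
| u_allWL G D A v u C w :
    useq G ((winst v A, u) :: D) C w -> useq G ((AllW A, u) :: D) C w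
| u_exTR G D A t w : useq G D (tinst t A) w -> useq G D (ExT A) w
| u_exWR G D A v w : useq G D (winst v A) w -> useq G D (ExW A) w
| u_exTL G D A u C w :
    useq (tshift_ctx G) ((A, u) :: tshift_ctx D) (tshift C) w ->
    useq G ((ExT A, u) :: D) C w
| u_exWL G D A u C w :
    useq (wshift_ctx G) ((A, wshift u) :: wshift_ctx D) (wshiftp C) (wshift w) ->
    useq G ((ExW A, u) :: D) C w
| u_atR G D A u v : useq G D A u -> useq G D (At A u) v
| u_atL G D A u v C w :
    useq G ((A, u) :: D) C w -> useq G ((At A u, v) :: D) C w
| u_downR G D A w : useq G D (winst w A) w -> useq G D (Down A) w
| u_downL G D A v C w :
    useq G ((winst v A, v) :: D) C w -> useq G ((Down A, v) :: D) C w.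
End Props.
Arguments useq {CD Fn Pr}.
Arguments Atom {CD Fn Pr}.
Arguments Tensor {CD Fn Pr}.
Arguments One {CD Fn Pr}.
Arguments Lolli {CD Fn Pr}.
Arguments With {CD Fn Pr}.
Arguments Top {CD Fn Pr}.
Arguments Plus {CD Fn Pr}.
Arguments Zero {CD Fn Pr}.
Arguments Bang {CD Fn Pr}.
Arguments AllT {CD Fn Pr}.
Arguments AllW {CD Fn Pr}.
Arguments ExT {CD Fn Pr}.
Arguments ExW {CD Fn Pr}.
Arguments At {CD Fn Pr}.
Arguments Down {CD Fn Pr}.

Section PolarizedSyntax.
Variables (CD : constraint_domain) (Fn Pr : Type).

Inductive pprop : Type :=
| PAtom (p : Pr) (ts : list (term Fn))
| PTensor (P Q : pprop)
| POne
| PPlus (P Q : pprop)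
| PZero
| PBang (N : nprop)
| PExT (P : pprop)
| PExW (P : pprop)
| PDown (P : pprop)
| PAt (P : pprop) (w : wexp CD)
| PPos (N : nprop)
with nprop : Type :=
| NAtom (n : Pr) (ts : list (term Fn))
| NWith (N M : nprop)
| NTop
| NLolli (P : pprop) (N : nprop)
| NAllT (N : nprop)
| NAllW (N : nprop)
| NDown (N : nprop)
| NAt (N : nprop) (w : wexp CD)
| NNeg (P : pprop).

End PolarizedSyntax.
Arguments PAtom {CD Fn Pr}.
Arguments PTensor {CD Fn Pr}.
Arguments POne {CD Fn Pr}.
Arguments PPlus {CD Fn Pr}.
Arguments PZero {CD Fn Pr}.
Arguments PBang {CD Fn Pr}.
Arguments PExT {CD Fn Pr}.
Arguments PExW {CD Fn Pr}.
Arguments PDown {CD Fn Pr}.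
Arguments PAt {CD Fn Pr}.
Arguments PPos {CD Fn Pr}.
Arguments NAtom {CD Fn Pr}.
Arguments NWith {CD Fn Pr}.
Arguments NTop {CD Fn Pr}.
Arguments NLolli {CD Fn Pr}.
Arguments NAllT {CD Fn Pr}.
Arguments NAllW {CD Fn Pr}.
Arguments NDown {CD Fn Pr}.
Arguments NAt {CD Fn Pr}.
Arguments NNeg {CD Fn Pr}.

Section Polarized.
Variables (CD : constraint_domain) (Fn Pr : Type).
Local Notation pprop := (pprop CD Fn Pr).
Local Notation nprop := (nprop CD Fn Pr).

Fixpoint ppsub (st : nat -> term Fn) (sw : nat -> wexp CD) (P : pprop) : pprop :=
  match P with
  | PAtom p ts => PAtom p (map (tsub st) ts)
  | PTensor P Q => PTensor (ppsub st sw P) (ppsub st sw Q)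
  | POne => POne
  | PPlus P Q => PPlus (ppsub st sw P) (ppsub st sw Q)
  | PZero => PZero
  | PBang N => PBang (npsub st sw N)
  | PExT P => PExT (ppsub (up_t st) sw P)
  | PExW P => PExW (ppsub st (up_w sw) P)
  | PDown P => PDown (ppsub st (up_w sw) P)
  | PAt P u => PAt (ppsub st sw P) (wsub sw u)
  | PPos N => PPos (npsub st sw N)
  end
with npsub (st : nat -> term Fn) (sw : nat -> wexp CD) (N : nprop) : nprop :=
  match N with
  | NAtom n ts => NAtom n (map (tsub st) ts)
  | NWith N M => NWith (npsub st sw N) (npsub st sw M)
  | NTop => NTop
  | NLolli P N => NLolli (ppsub st sw P) (npsub st sw N)
  | NAllT N => NAllT (npsub (up_t st) sw N)
  | NAllW N => NAllW (npsub st (up_w sw) N)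
  | NDown N => NDown (npsub st (up_w sw) N)
  | NAt N u => NAt (npsub st sw N) (wsub sw u)
  | NNeg P => NNeg (ppsub st sw P)
  end.

Definition ptinst (t : term Fn) (P : pprop) : pprop := ppsub (scons t (@TVar Fn)) (@WVar CD) P.
Definition pwinst (u : wexp CD) (P : pprop) : pprop := ppsub (@TVar Fn) (scons u (@WVar CD)) P.
Definition ntinst (t : term Fn) (N : nprop) : nprop := npsub (scons t (@TVar Fn)) (@WVar CD) N.
Definition nwinst (u : wexp CD) (N : nprop) : nprop := npsub (@TVar Fn) (scons u (@WVar CD)) N.
Definition ptshift (P : pprop) : pprop := ppsub (fun k => TVar (S k)) (@WVar CD) P.
Definition pwshift (P : pprop) : pprop := ppsub (@TVar Fn) (fun k => WVar (S k)) P.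
Definition ntshift (N : nprop) : nprop := npsub (fun k => TVar (S k)) (@WVar CD) N.
Definition nwshift (N : nprop) : nprop := npsub (@TVar Fn) (fun k => WVar (S k)) N.

Fixpoint perase (P : pprop) : prop CD Fn Pr :=
  match P with
  | PAtom p ts => Atom p ts
  | PTensor P Q => Tensor (perase P) (perase Q)
  | POne => One
  | PPlus P Q => Plus (perase P) (perase Q)
  | PZero => Zero
  | PBang N => Bang (nerase N)
  | PExT P => ExT (perase P)
  | PExW P => ExW (perase P)
  | PDown P => Down (perase P)
  | PAt P u => At (perase P) u
  | PPos N => nerase N
  end
with nerase (N : nprop) : prop CD Fn Pr :=
  match N with
  | NAtom n ts => Atom n ts
  | NWith N M => With (nerase N) (nerase M)
  | NTop => Top
  | NLolli P N => Lolli (perase P) (nerase N)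
  | NAllT N => AllT (nerase N)
  | NAllW N => AllW (nerase N)
  | NDown N => Down (nerase N)
  | NAt N u => At (nerase N) u
  | NNeg P => perase P
  end.

(* Polarity assignment to atomic predicates: true = positive. *)
Variable pol : Pr -> bool.

(* the grammar's requirement that positive (resp. negative) atoms occur
   only as p t (resp. n t) *)
Fixpoint pwf (P : pprop) : Prop :=
  match P with
  | PAtom p _ => pol p = true
  | PTensor P Q => pwf P /\ pwf Q
  | POne => True
  | PPlus P Q => pwf P /\ pwf Q
  | PZero => True
  | PBang N => nwf N
  | PExT P => pwf P
  | PExW P => pwf P
  | PDown P => pwf P
  | PAt P _ => pwf P
  | PPos N => nwf N
  end
with nwf (N : nprop) : Prop :=
  match N with
  | NAtom n _ => pol n = false
  | NWith N M => nwf N /\ nwf M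
  | NTop => True
  | NLolli P N => pwf P /\ nwf N
  | NAllT N => nwf N
  | NAllW N => nwf N
  | NDown N => nwf N
  | NAt N _ => nwf N
  | NNeg P => pwf P
  end.

Definition pos_polarization (A : prop CD Fn Pr) (P : pprop) : Prop :=
  pwf P /\ perase P = A.
Definition neg_polarization (A : prop CD Fn Pr) (N : nprop) : Prop :=
  nwf N /\ nerase N = A.

Definition nhyp : Type := (nprop * wexp CD)%type.
Definition phyp : Type := (pprop * wexp CD)%type.

(* right-hand side of an active sequent:  . ; P @ w   or   N @ w ; . *)
Inductive rhs : Type :=
| RP (P : pprop) (w : wexp CD)
| RN (N : nprop) (w : wexp CD).

Definition ntshift_ctx (G : list nhyp) : list nhyp :=
  map (fun h => (ntshift (fst h), snd h)) G.
Definition nwshift_ctx (G : list nhyp) : list nhyp :=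
  map (fun h => (nwshift (fst h), wshift (snd h))) G.
Definition ptshift_ctx (O : list phyp) : list phyp :=
  map (fun h => (ptshift (fst h), snd h)) O.
Definition pwshift_ctx (O : list phyp) : list phyp :=
  map (fun h => (pwshift (fst h), wshift (snd h))) O.
Definition rhs_tshift (R : rhs) : rhs :=
  match R with RP P w => RP (ptshift P) w | RN N w => RN (ntshift N) w end.
Definition rhs_wshift (R : rhs) : rhs :=
  match R with
  | RP P w => RP (pwshift P) (wshift w)
  | RN N w => RN (nwshift N) (wshift w)
  end.

(* act G D O R      :  G ; D ; O ==> R            (active)
   lfoc G D N u Q w :  G ; D ; [N @ u] ==> Q @ w   (left focus)
   rfoc G D P w     :  G ; D ==> [P @ w]           (right focus)  *)
Inductive act : list nhyp -> list nhyp -> list phyp -> rhs -> Prop :=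
| a_perm G D D' O O' R :
    Permutation D D' -> Permutation O O' -> act G D O R -> act G D' O' R
| a_tensorL G D O P Q u R :
    act G D ((P, u) :: (Q, u) :: O) R -> act G D ((PTensor P Q, u) :: O) R
| a_oneL G D O u R : act G D O R -> act G D ((POne, u) :: O) R
| a_plusL G D O P Q u R :
    act G D ((P, u) :: O) R -> act G D ((Q, u) :: O) R ->
    act G D ((PPlus P Q, u) :: O) R
| a_downLA G D O P v R :
    act G D ((pwinst v P, v) :: O) R -> act G D ((PDown P, v) :: O) R
| a_atLA G D O P u v R :
    act G D ((P, u) :: O) R -> act G D ((PAt P u, v) :: O) R
| a_exTL G D O P u R :
    act (ntshift_ctx G) (ntshift_ctx D) ((P, u) :: ptshift_ctx O) (rhs_tshift R) ->
    act G D ((PExT P, u) :: O) R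
| a_exWL G D O P u R :
    act (nwshift_ctx G) (nwshift_ctx D) ((P, wshift u) :: pwshift_ctx O) (rhs_wshift R) ->
    act G D ((PExW P, u) :: O) R
| a_bangL G D O N u R : act ((N, u) :: G) D O R -> act G D ((PBang N, u) :: O) R
| a_posL G D O N w R : act G ((N, w) :: D) O R -> act G D ((PPos N, w) :: O) R
| a_lp G D O p ts w R :
    pol p = true ->
    act G ((NNeg (PAtom p ts), w) :: D) O R -> act G D ((PAtom p ts, w) :: O) R
| a_zeroL G D O u R : act G D ((PZero, u) :: O) R
| a_withR G D O M N w :
    act G D O (RN M w) -> act G D O (RN N w) -> act G D O (RN (NWith M N) w)
| a_topR G D O w : act G D O (RN NTop w)
| a_lolliR G D O P N w :
    act G D ((P, w) :: O) (RN N w) -> act G D O (RN (NLolli P N) w)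
| a_downRA G D O N w : act G D O (RN (nwinst w N) w) -> act G D O (RN (NDown N) w)
| a_atRA G D O N u w : act G D O (RN N u) -> act G D O (RN (NAt N u) w)
| a_allTR G D O N u :
    act (ntshift_ctx G) (ntshift_ctx D) (ptshift_ctx O) (RN N u) ->
    act G D O (RN (NAllT N) u)
| a_allWR G D O N u :
    act (nwshift_ctx G) (nwshift_ctx D) (pwshift_ctx O) (RN N (wshift u)) ->
    act G D O (RN (NAllW N) u)
| a_negR G D O P w : act G D O (RP P w) -> act G D O (RN (NNeg P) w)
| a_rp G D O n ts w :
    pol n = false ->
    act G D O (RP (PPos (NAtom n ts)) w) -> act G D O (RN (NAtom n ts) w)
| a_lf G D N u Q w :
    (forall p ts, N <> NNeg (PAtom p ts)) ->
    lfoc G D N u Q w -> act G ((N, u) :: D) [] (RP Q w)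
| a_cplf G D N u Q w :
    In (N, u) G -> lfoc G D N u Q w -> act G D [] (RP Q w)
| a_rf G D P w :
    (forall n ts, P <> PPos (NAtom n ts)) ->
    rfoc G D P w -> act G D [] (RP P w)
with lfoc : list nhyp -> list nhyp -> nprop -> wexp CD -> pprop -> wexp CD -> Prop :=
| l_perm G D D' N u Q w : Permutation D D' -> lfoc G D N u Q w -> lfoc G D' N u Q w
| l_li G n ts w w' :
    pol n = false -> weq w w' -> lfoc G [] (NAtom n ts) w (PPos (NAtom n ts)) w'
| l_negL G D P u Q w : act G D [(P, u)] (RP Q w) -> lfoc G D (NNeg P) u Q w
| l_withL1 G D N1 N2 u Q w : lfoc G D N1 u Q w -> lfoc G D (NWith N1 N2) u Q w
| l_withL2 G D N1 N2 u Q w : lfoc G D N2 u Q w -> lfoc G D (NWith N1 N2) u Q w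
| l_lolliL G D X P N u Q w :
    rfoc G D P u -> lfoc G X N u Q w -> lfoc G (D ++ X) (NLolli P N) u Q w
| l_allTL G D N t u Q w : lfoc G D (ntinst t N) u Q w -> lfoc G D (NAllT N) u Q w
| l_allWL G D N v u Q w : lfoc G D (nwinst v N) u Q w -> lfoc G D (NAllW N) u Q w
| l_downLF G D N v Q w : lfoc G D (nwinst v N) v Q w -> lfoc G D (NDown N) v Q w
| l_atLF G D N u v Q w : lfoc G D N u Q w -> lfoc G D (NAt N u) v Q w
with rfoc : list nhyp -> list nhyp -> pprop -> wexp CD -> Prop :=
| r_perm G D D' P w : Permutation D D' -> rfoc G D P w -> rfoc G D' P w
| r_ri G p ts w w' :
    pol p = true -> weq w w' -> rfoc G [(NNeg (PAtom p ts), w)] (PAtom p ts) w'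
| r_posR G D N w : act G D [] (RN N w) -> rfoc G D (PPos N) w
| r_tensorR G D X P Q w :
    rfoc G D P w -> rfoc G X Q w -> rfoc G (D ++ X) (PTensor P Q) w
| r_plusR1 G D P Q w : rfoc G D P w -> rfoc G D (PPlus P Q) w
| r_plusR2 G D P Q w : rfoc G D Q w -> rfoc G D (PPlus P Q) w
| r_exTR G D P t w : rfoc G D (ptinst t P) w -> rfoc G D (PExT P) w
| r_exWR G D P v w : rfoc G D (pwinst v P) w -> rfoc G D (PExW P) w
| r_bangR G N w : act G [] [] (RN N w) -> rfoc G [] (PBang N) w
| r_downRF G D P w : rfoc G D (pwinst w P) w -> rfoc G D (PDown P) w
| r_atRF G D P u w : rfoc G D P u -> rfoc G D (PAt P u) w
| r_oneR G w : rfoc G [] POne w.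
End Polarized.

From Stdlib Require Import List Permutation Lia FunctionalExtensionality.
Import ListNotations.
Set Implicit Arguments.

(* Completeness of focusing rests on the two meta-theorems of the focused calculus.  Cut is
   admissible by induction on the cut formula: a cut is pushed up both derivations until the
   cut formula is principal on both sides, where it is replaced by cuts on its immediate
   subformulas.  Identity is admissible by eta-expansion: a formula can be introduced as
   soon as every focus on it can be continued.  With these, each unfocused rule is
   admissible in the focused calculus for every polarization of its formulas: asynchronous
   rules are applied directly, and a synchronous rule is obtained by continuing the right
   focus that proves its premise, or by cutting an expanded identity against a left focus
   on its principal formula.  Hypotheses of the focused calculus being negative, the linear
   context is polarized as [neg P] throughout, and made active as [P] only at the end. *)

Lemma Permutation_cons_split A (a b : A) l l' :
  Permutation (a :: l) (b :: l') ->
  (a = b /\ Permutation l l') \/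
  (exists l'', Permutation l (b :: l'') /\ Permutation l' (a :: l'')).
Proof.
  intros H.
  assert (Ha : In a (b :: l')) by (eapply Permutation_in; [exact H | left; auto]).
  destruct Ha as [<- | Ha]; [left; eauto using Permutation_cons_inv | right].
  apply in_split in Ha as [l1 [l2 ->]].
  exists (l1 ++ l2); split; [ | symmetry; apply Permutation_middle].
  apply Permutation_cons_inv with a.
  rewrite H, <- Permutation_middle; apply perm_swap.
Qed.

Lemma Permutation_app_cons_split A (x : A) l1 l2 l :
  Permutation (l1 ++ l2) (x :: l) ->
  (exists l1', Permutation l1 (x :: l1') /\ Permutation l (l1' ++ l2)) \/
  (exists l2', Permutation l2 (x :: l2') /\ Permutation l (l1 ++ l2')).
Proof.
  intros H.
  assert (Hx : In x (l1 ++ l2)) by (eapply Permutation_in; [symmetry; eauto | left; auto]).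
  apply in_app_or in Hx as [Hx|Hx]; apply in_split in Hx as [a [b ->]]; [left | right];
    exists (a ++ b); (split; [symmetry; apply Permutation_middle | ]);
    apply Permutation_cons_inv with x; rewrite <- H.
  - rewrite <- !app_assoc; symmetry; apply Permutation_middle.
  - rewrite !app_assoc; symmetry; apply Permutation_middle.
Qed.

Lemma Permutation_cons_app_middle A (x : A) pre l l' :
  Permutation l (x :: l') -> Permutation (pre ++ l) (x :: pre ++ l').
Proof. intros ->; symmetry; apply Permutation_middle. Qed.

(** * Substitution *)

Scheme pprop_ind2 := Induction for pprop Sort Prop
  with nprop_ind2 := Induction for nprop Sort Prop.
Combined Scheme pprop_nprop_ind from pprop_ind2, nprop_ind2.

Section Substitution.
Context {CD : constraint_domain} {Fn Pr : Type}.
Local Notation T := (term Fn).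
Local Notation W := (wexp CD).
Local Notation PP := (pprop CD Fn Pr).
Local Notation NN := (nprop CD Fn Pr).

Fixpoint term_ind_forall (P : T -> Prop) (HV : forall n, P (TVar n))
  (HA : forall f ts, Forall P ts -> P (TApp f ts)) (t : T) : P t :=
  match t with
  | TVar n => HV n
  | TApp f ts => HA f ts ((fix go l : Forall P l :=
        match l with
        | [] => Forall_nil _
        | x :: l => Forall_cons _ (term_ind_forall HV HA x) (go l)
        end) ts)
  end.

Lemma tsub_comp (s1 s2 : nat -> T) t :
  tsub s1 (tsub s2 t) = tsub (fun n => tsub s1 (s2 n)) t.
Proof.
  induction t using term_ind_forall; simpl; auto.
  f_equal. rewrite map_map. induction H; simpl; f_equal; auto.
Qed.

Lemma tsub_id (t : T) : tsub (@TVar Fn) t = t.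
Proof.
  induction t using term_ind_forall; simpl; auto.
  f_equal. induction H; simpl; f_equal; auto.
Qed.

Lemma wsub_comp (s1 s2 : nat -> W) u :
  wsub s1 (wsub s2 u) = wsub (fun n => wsub s1 (s2 n)) u.
Proof. induction u; simpl; f_equal; auto. Qed.

Lemma wsub_id (u : W) : wsub (@WVar CD) u = u.
Proof. induction u; simpl; f_equal; auto. Qed.

Lemma up_t_comp (s1 s2 : nat -> T) :
  (fun n => tsub (up_t s1) (up_t s2 n)) = up_t (fun n => tsub s1 (s2 n)).
Proof.
  apply functional_extensionality; intros [|n]; auto.
  unfold up_t; simpl. rewrite !tsub_comp. reflexivity.
Qed.

Lemma up_w_comp (s1 s2 : nat -> W) :
  (fun n => wsub (up_w s1) (up_w s2 n)) = up_w (fun n => wsub s1 (s2 n)).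
Proof.
  apply functional_extensionality; intros [|n]; auto.
  unfold up_w; simpl. rewrite !wsub_comp. reflexivity.
Qed.

Lemma up_t_id : up_t (@TVar Fn) = @TVar Fn.
Proof. apply functional_extensionality; intros [|n]; reflexivity. Qed.

Lemma up_w_id : up_w (@WVar CD) = @WVar CD.
Proof. apply functional_extensionality; intros [|n]; reflexivity. Qed.

Lemma ppsub_npsub_comp :
  (forall (P : PP) st1 sw1 st2 sw2,
     ppsub st1 sw1 (ppsub st2 sw2 P) =
     ppsub (fun n => tsub st1 (st2 n)) (fun n => wsub sw1 (sw2 n)) P) /\
  (forall (N : NN) st1 sw1 st2 sw2,
     npsub st1 sw1 (npsub st2 sw2 N) =
     npsub (fun n => tsub st1 (st2 n)) (fun n => wsub sw1 (sw2 n)) N).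
Proof.
  apply pprop_nprop_ind; intros; simpl;
  rewrite ?H, ?H0, ?up_t_comp, ?up_w_comp, ?wsub_comp; auto;
  f_equal; rewrite map_map; apply map_ext; intros; apply tsub_comp.
Qed.

Definition ppsub_comp := proj1 ppsub_npsub_comp.
Definition npsub_comp := proj2 ppsub_npsub_comp.

Lemma ppsub_npsub_id :
  (forall P : PP, ppsub (@TVar Fn) (@WVar CD) P = P) /\
  (forall N : NN, npsub (@TVar Fn) (@WVar CD) N = N).
Proof.
  apply pprop_nprop_ind; intros; simpl; rewrite ?up_t_id, ?up_w_id, ?H, ?H0, ?wsub_id; auto;
  f_equal; rewrite <- (map_id ts) at 2; apply map_ext; apply tsub_id.
Qed.

Definition ppsub_id := proj1 ppsub_npsub_id.
Definition npsub_id := proj2 ppsub_npsub_id.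

Definition tvar_succ : nat -> T := fun k => TVar (S k).
Definition wvar_succ : nat -> W := fun k => WVar (S k).

Ltac subst_ext := apply functional_extensionality; intros [|?]; simpl;
  unfold up_t, up_w; simpl;
  rewrite ?tsub_comp, ?wsub_comp; simpl; rewrite ?tsub_id, ?wsub_id; auto;
  try (symmetry; apply tsub_id); try (symmetry; apply wsub_id).

Lemma npsub_up_t_ntshift st sw (N : NN) :
  npsub (up_t st) sw (ntshift N) = ntshift (npsub st sw N).
Proof. unfold ntshift; rewrite !npsub_comp; f_equal; subst_ext. Qed.

Lemma ppsub_up_t_ptshift st sw (P : PP) :
  ppsub (up_t st) sw (ptshift P) = ptshift (ppsub st sw P).
Proof. unfold ptshift; rewrite !ppsub_comp; f_equal; subst_ext. Qed.

Lemma npsub_up_w_nwshift st sw (N : NN) :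
  npsub st (up_w sw) (nwshift N) = nwshift (npsub st sw N).
Proof. unfold nwshift; rewrite !npsub_comp; f_equal; subst_ext. Qed.

Lemma ppsub_up_w_pwshift st sw (P : PP) :
  ppsub st (up_w sw) (pwshift P) = pwshift (ppsub st sw P).
Proof. unfold pwshift; rewrite !ppsub_comp; f_equal; subst_ext. Qed.

Lemma wsub_up_w_wshift sw (u : W) : wsub (up_w sw) (wshift u) = wshift (wsub sw u).
Proof. unfold wshift; rewrite !wsub_comp; reflexivity. Qed.

Lemma npsub_ntinst st sw t (N : NN) :
  npsub st sw (ntinst t N) = ntinst (tsub st t) (npsub (up_t st) sw N).
Proof. unfold ntinst; rewrite !npsub_comp; f_equal; subst_ext. Qed.

Lemma ppsub_ptinst st sw t (P : PP) :
  ppsub st sw (ptinst t P) = ptinst (tsub st t) (ppsub (up_t st) sw P).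
Proof. unfold ptinst; rewrite !ppsub_comp; f_equal; subst_ext. Qed.

Lemma npsub_nwinst st sw v (N : NN) :
  npsub st sw (nwinst v N) = nwinst (wsub sw v) (npsub st (up_w sw) N).
Proof. unfold nwinst; rewrite !npsub_comp; f_equal; subst_ext. Qed.

Lemma ppsub_pwinst st sw v (P : PP) :
  ppsub st sw (pwinst v P) = pwinst (wsub sw v) (ppsub st (up_w sw) P).
Proof. unfold pwinst; rewrite !ppsub_comp; f_equal; subst_ext. Qed.

Lemma wsub_inst_wshift v (u : W) : wsub (scons v (@WVar CD)) (wshift u) = u.
Proof. unfold wshift; rewrite wsub_comp; apply wsub_id. Qed.

Lemma ntinst_up_t st sw (N : NN) :
  ntinst (st 0) (npsub (up_t (fun n => tsub st (tvar_succ n))) sw N) = npsub st sw N.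
Proof. unfold ntinst; rewrite npsub_comp; f_equal; subst_ext. Qed.

Lemma ptinst_up_t st sw (P : PP) :
  ptinst (st 0) (ppsub (up_t (fun n => tsub st (tvar_succ n))) sw P) = ppsub st sw P.
Proof. unfold ptinst; rewrite ppsub_comp; f_equal; subst_ext. Qed.

Lemma nwinst_up_w st sw (N : NN) :
  nwinst (sw 0) (npsub st (up_w (fun n => wsub sw (wvar_succ n))) N) = npsub st sw N.
Proof. unfold nwinst; rewrite npsub_comp; f_equal; subst_ext. Qed.

Lemma pwinst_up_w st sw (P : PP) :
  pwinst (sw 0) (ppsub st (up_w (fun n => wsub sw (wvar_succ n))) P) = ppsub st sw P.
Proof. unfold pwinst; rewrite ppsub_comp; f_equal; subst_ext. Qed.

Lemma weq_wsub (u v : W) sw : weq u v -> weq (wsub sw u) (wsub sw v).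
Proof. induction 1; simpl; eauto using weq. Qed.

Fixpoint psize (P : PP) : nat :=
  match P with
  | PAtom _ _ | POne | PZero => 1
  | PTensor P Q | PPlus P Q => S (psize P + psize Q)
  | PBang N | PPos N => S (nsize N)
  | PExT P | PExW P | PDown P | PAt P _ => S (psize P)
  end
with nsize (N : NN) : nat :=
  match N with
  | NAtom _ _ | NTop => 1
  | NWith N M => S (nsize N + nsize M)
  | NLolli P N => S (psize P + nsize N)
  | NAllT N | NAllW N | NDown N | NAt N _ => S (nsize N)
  | NNeg P => S (psize P)
  end.

Lemma psize_nsize_sub :
  (forall (P : PP) st sw, psize (ppsub st sw P) = psize P) /\
  (forall (N : NN) st sw, nsize (npsub st sw N) = nsize N).
Proof. apply pprop_nprop_ind; intros; simpl; rewrite ?H, ?H0; auto. Qed.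

Definition psize_sub := proj1 psize_nsize_sub.
Definition nsize_sub := proj2 psize_nsize_sub.

Lemma perase_nerase_sub :
  (forall (P : PP) st sw, perase (ppsub st sw P) = psub st sw (perase P)) /\
  (forall (N : NN) st sw, nerase (npsub st sw N) = psub st sw (nerase N)).
Proof. apply pprop_nprop_ind; intros; simpl; rewrite ?H, ?H0; auto. Qed.

Definition perase_sub := proj1 perase_nerase_sub.
Definition nerase_sub := proj2 perase_nerase_sub.

Section WellFormed.
Variable pol : Pr -> bool.

Lemma pwf_nwf_sub :
  (forall (P : PP) st sw, pwf pol P -> pwf pol (ppsub st sw P)) /\
  (forall (N : NN) st sw, nwf pol N -> nwf pol (npsub st sw N)).
Proof. apply pprop_nprop_ind; intros; simpl in *; intuition. Qed.

Definition pwf_sub := proj1 pwf_nwf_sub.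
Definition nwf_sub := proj2 pwf_nwf_sub.

End WellFormed.
End Substitution.

Scheme act_mind := Induction for act Sort Prop
  with lfoc_mind := Induction for lfoc Sort Prop
  with rfoc_mind := Induction for rfoc Sort Prop.
Combined Scheme focused_ind from act_mind, lfoc_mind, rfoc_mind.

Section Focused.
Context {CD : constraint_domain} {Fn Pr : Type}.
Variable pol : Pr -> bool.
Local Notation T := (term Fn).
Local Notation W := (wexp CD).
Local Notation PP := (pprop CD Fn Pr).
Local Notation NN := (nprop CD Fn Pr).
Local Notation nh := (nhyp CD Fn Pr).
Local Notation ph := (phyp CD Fn Pr).
Local Notation act := (act pol).
Local Notation lfoc := (lfoc pol).
Local Notation rfoc := (rfoc pol).
Implicit Types (G D E X Y : list nh) (O : list ph) (R : rhs CD Fn Pr)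
  (N M : NN) (P Q : PP) (u v w : W) (t : T).

Definition nhyp_sub st sw (h : nh) : nh := (npsub st sw (fst h), wsub sw (snd h)).
Definition phyp_sub st sw (h : ph) : ph := (ppsub st sw (fst h), wsub sw (snd h)).
Definition rhs_sub st sw R : rhs CD Fn Pr :=
  match R with
  | RP P w => RP (ppsub st sw P) (wsub sw w)
  | RN N w => RN (npsub st sw N) (wsub sw w)
  end.
Arguments nhyp_sub st sw !h /.
Arguments phyp_sub st sw !h /.
Arguments rhs_sub st sw !R /.

Lemma ntshift_ctx_sub st sw G :
  map (nhyp_sub (up_t st) sw) (ntshift_ctx G) = ntshift_ctx (map (nhyp_sub st sw) G).
Proof.
  unfold ntshift_ctx; rewrite !map_map; apply map_ext; intros [N u]; simpl.
  rewrite npsub_up_t_ntshift; reflexivity.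
Qed.

Lemma ptshift_ctx_sub st sw O :
  map (phyp_sub (up_t st) sw) (ptshift_ctx O) = ptshift_ctx (map (phyp_sub st sw) O).
Proof.
  unfold ptshift_ctx; rewrite !map_map; apply map_ext; intros [P u]; simpl.
  rewrite ppsub_up_t_ptshift; reflexivity.
Qed.

Lemma nwshift_ctx_sub st sw G :
  map (nhyp_sub st (up_w sw)) (nwshift_ctx G) = nwshift_ctx (map (nhyp_sub st sw) G).
Proof.
  unfold nwshift_ctx; rewrite !map_map; apply map_ext; intros [N u]; simpl.
  rewrite npsub_up_w_nwshift, wsub_up_w_wshift; reflexivity.
Qed.

Lemma pwshift_ctx_sub st sw O :
  map (phyp_sub st (up_w sw)) (pwshift_ctx O) = pwshift_ctx (map (phyp_sub st sw) O).
Proof.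
  unfold pwshift_ctx; rewrite !map_map; apply map_ext; intros [P u]; simpl.
  rewrite ppsub_up_w_pwshift, wsub_up_w_wshift; reflexivity.
Qed.

Lemma rhs_tshift_sub st sw R :
  rhs_sub (up_t st) sw (rhs_tshift R) = rhs_tshift (rhs_sub st sw R).
Proof. destruct R; simpl; rewrite ?npsub_up_t_ntshift, ?ppsub_up_t_ptshift; reflexivity. Qed.

Lemma rhs_wshift_sub st sw R :
  rhs_sub st (up_w sw) (rhs_wshift R) = rhs_wshift (rhs_sub st sw R).
Proof.
  destruct R; simpl; rewrite ?npsub_up_w_nwshift, ?ppsub_up_w_pwshift, ?wsub_up_w_wshift;
  reflexivity.
Qed.

Lemma focused_sub :
  (forall G D O R, act G D O R -> forall st sw,
      act (map (nhyp_sub st sw) G) (map (nhyp_sub st sw) D) (map (phyp_sub st sw) O)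
          (rhs_sub st sw R)) /\
  (forall G D N u Q w, lfoc G D N u Q w -> forall st sw,
      lfoc (map (nhyp_sub st sw) G) (map (nhyp_sub st sw) D) (npsub st sw N) (wsub sw u)
           (ppsub st sw Q) (wsub sw w)) /\
  (forall G D P w, rfoc G D P w -> forall st sw,
      rfoc (map (nhyp_sub st sw) G) (map (nhyp_sub st sw) D) (ppsub st sw P) (wsub sw w)).
Proof.
  apply focused_ind; intros; cbn [map rhs_sub nhyp_sub phyp_sub fst snd ppsub npsub] in *;
  try solve [eapply a_perm; [eapply Permutation_map; eassumption
                            | eapply Permutation_map; eassumption | eauto]];
  try solve [eapply l_perm; [eapply Permutation_map; eassumption | eauto]];
  try solve [eapply r_perm; [eapply Permutation_map; eassumption | eauto]];
  try solve [econstructor; eauto using Permutation_map, weq_wsub].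
  - apply a_downLA. rewrite <- ppsub_pwinst. apply H.
  - apply a_exTL. rewrite <- !ntshift_ctx_sub, <- !ptshift_ctx_sub, <- rhs_tshift_sub. apply H.
  - apply a_exWL.
    rewrite <- !nwshift_ctx_sub, <- !pwshift_ctx_sub, <- rhs_wshift_sub, <- wsub_up_w_wshift.
    apply H.
  - apply a_downRA. rewrite <- npsub_nwinst. apply H.
  - apply a_allTR. rewrite <- !ntshift_ctx_sub, <- !ptshift_ctx_sub. apply H.
  - apply a_allWR. rewrite <- !nwshift_ctx_sub, <- !pwshift_ctx_sub, <- wsub_up_w_wshift. apply H.
  - apply a_lf; auto. intros p ts E; destruct N; try discriminate.
    destruct P; try discriminate. injection E; intros; subst; eapply n; eauto.
  - eapply a_cplf; eauto. apply in_map_iff; exists (N, u); auto.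
  - apply a_rf; auto. intros p ts E; destruct P; try discriminate.
    destruct N; try discriminate. eapply n; eauto.
  - rewrite map_app; eapply l_lolliL; [apply H | apply H0].
  - apply l_allTL with (t := tsub st t). rewrite <- npsub_ntinst; auto.
  - apply l_allWL with (v := wsub sw v). rewrite <- npsub_nwinst; auto.
  - apply l_downLF. rewrite <- npsub_nwinst; auto.
  - rewrite map_app; eapply r_tensorR; [apply H | apply H0].
  - apply r_exTR with (t := tsub st t). rewrite <- ppsub_ptinst; auto.
  - apply r_exWR with (v := wsub sw v). rewrite <- ppsub_pwinst; auto.
  - apply r_downRF. rewrite <- ppsub_pwinst; auto.
Qed.

Lemma act_sub G D O R st sw : act G D O R ->
  act (map (nhyp_sub st sw) G) (map (nhyp_sub st sw) D) (map (phyp_sub st sw) O) (rhs_sub st sw R).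
Proof. intros H; now apply focused_sub. Qed.

Lemma lfoc_sub G D N u Q w st sw : lfoc G D N u Q w ->
  lfoc (map (nhyp_sub st sw) G) (map (nhyp_sub st sw) D) (npsub st sw N) (wsub sw u)
       (ppsub st sw Q) (wsub sw w).
Proof. intros H; now apply focused_sub. Qed.

Lemma rfoc_sub G D P w st sw : rfoc G D P w ->
  rfoc (map (nhyp_sub st sw) G) (map (nhyp_sub st sw) D) (ppsub st sw P) (wsub sw w).
Proof. intros H; now apply focused_sub. Qed.

Lemma focused_weaken :
  (forall G D O R, act G D O R -> forall G', incl G G' -> act G' D O R) /\
  (forall G D N u Q w, lfoc G D N u Q w -> forall G', incl G G' -> lfoc G' D N u Q w) /\
  (forall G D P w, rfoc G D P w -> forall G', incl G G' -> rfoc G' D P w).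
Proof.
  apply focused_ind; intros;
  solve [econstructor; eauto using incl_map, incl_cons, in_eq, incl_tl].
Qed.

Lemma act_weaken G G' D O R : act G D O R -> incl G G' -> act G' D O R.
Proof. intros; eapply focused_weaken; eauto. Qed.

Lemma lfoc_weaken G G' D N u Q w : lfoc G D N u Q w -> incl G G' -> lfoc G' D N u Q w.
Proof. intros; eapply focused_weaken; eauto. Qed.

Lemma rfoc_weaken G G' D P w : rfoc G D P w -> incl G G' -> rfoc G' D P w.
Proof. intros; eapply focused_weaken; eauto. Qed.

Lemma act_sub_weaken G G' D O R st sw : act G D O R -> incl (map (nhyp_sub st sw) G) G' ->
  act G' (map (nhyp_sub st sw) D) (map (phyp_sub st sw) O) (rhs_sub st sw R).
Proof. intros; eapply act_weaken; eauto using act_sub. Qed.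

Lemma ntshift_ctx_E G : ntshift_ctx G = map (nhyp_sub tvar_succ (@WVar CD)) G.
Proof. unfold ntshift_ctx; apply map_ext; intros [N u]; simpl; rewrite wsub_id; auto. Qed.

Lemma ptshift_ctx_E O : ptshift_ctx O = map (phyp_sub tvar_succ (@WVar CD)) O.
Proof. unfold ptshift_ctx; apply map_ext; intros [P u]; simpl; rewrite wsub_id; auto. Qed.

Lemma rhs_tshift_E R : rhs_tshift R = rhs_sub tvar_succ (@WVar CD) R.
Proof. destruct R; simpl; rewrite wsub_id; auto. Qed.

Lemma nwshift_ctx_E G : nwshift_ctx G = map (nhyp_sub (@TVar Fn) wvar_succ) G.
Proof. reflexivity. Qed.

Lemma pwshift_ctx_E O : pwshift_ctx O = map (phyp_sub (@TVar Fn) wvar_succ) O.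
Proof. reflexivity. Qed.

Lemma rhs_wshift_E R : rhs_wshift R = rhs_sub (@TVar Fn) wvar_succ R.
Proof. destruct R; reflexivity. Qed.

Lemma ntshift_ctx_app G G' : ntshift_ctx (G ++ G') = ntshift_ctx G ++ ntshift_ctx G'.
Proof. apply map_app. Qed.

Lemma nwshift_ctx_app G G' : nwshift_ctx (G ++ G') = nwshift_ctx G ++ nwshift_ctx G'.
Proof. apply map_app. Qed.

Lemma nhyp_sub_comp st1 sw1 st2 sw2 G :
  map (nhyp_sub st1 sw1) (map (nhyp_sub st2 sw2) G) =
  map (nhyp_sub (fun n => tsub st1 (st2 n)) (fun n => wsub sw1 (sw2 n))) G.
Proof.
  rewrite map_map; apply map_ext; intros [N u]; simpl; rewrite npsub_comp, wsub_comp; auto.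
Qed.

Lemma phyp_sub_comp st1 sw1 st2 sw2 O :
  map (phyp_sub st1 sw1) (map (phyp_sub st2 sw2) O) =
  map (phyp_sub (fun n => tsub st1 (st2 n)) (fun n => wsub sw1 (sw2 n))) O.
Proof.
  rewrite map_map; apply map_ext; intros [P u]; simpl; rewrite ppsub_comp, wsub_comp; auto.
Qed.

Lemma rhs_sub_comp st1 sw1 st2 sw2 R :
  rhs_sub st1 sw1 (rhs_sub st2 sw2 R) =
  rhs_sub (fun n => tsub st1 (st2 n)) (fun n => wsub sw1 (sw2 n)) R.
Proof. destruct R; simpl; rewrite ?npsub_comp, ?ppsub_comp, ?wsub_comp; auto. Qed.

Lemma nhyp_sub_id G : map (nhyp_sub (@TVar Fn) (@WVar CD)) G = G.
Proof.
  rewrite <- (map_id G) at 2; apply map_ext; intros [N u]; simpl.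
  rewrite npsub_id, wsub_id; auto.
Qed.

Lemma phyp_sub_id O : map (phyp_sub (@TVar Fn) (@WVar CD)) O = O.
Proof.
  rewrite <- (map_id O) at 2; apply map_ext; intros [P u]; simpl.
  rewrite ppsub_id, wsub_id; auto.
Qed.

Lemma rhs_sub_id R : rhs_sub (@TVar Fn) (@WVar CD) R = R.
Proof. destruct R; simpl; rewrite ?npsub_id, ?ppsub_id, ?wsub_id; auto. Qed.

Lemma incl_nhyp_sub_comp st1 sw1 st2 sw2 G G' G'' :
  incl (map (nhyp_sub st1 sw1) G) G' -> incl (map (nhyp_sub st2 sw2) G') G'' ->
  incl (map (nhyp_sub (fun n => tsub st2 (st1 n)) (fun n => wsub sw2 (sw1 n))) G) G''.
Proof. intros; rewrite <- nhyp_sub_comp; eauto using incl_tran, incl_map. Qed.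

Lemma act_tinst_rhs G D O R t :
  act (ntshift_ctx G) (ntshift_ctx D) (ptshift_ctx O) R ->
  act G D O (rhs_sub (scons t (@TVar Fn)) (@WVar CD) R).
Proof.
  intros H. apply (act_sub (scons t (@TVar Fn)) (@WVar CD)) in H.
  rewrite !ntshift_ctx_E, ptshift_ctx_E, !nhyp_sub_comp, phyp_sub_comp in H.
  rewrite !nhyp_sub_id, phyp_sub_id in H. exact H.
Qed.

Lemma act_winst_rhs G D O R v :
  act (nwshift_ctx G) (nwshift_ctx D) (pwshift_ctx O) R ->
  act G D O (rhs_sub (@TVar Fn) (scons v (@WVar CD)) R).
Proof.
  intros H. apply (act_sub (@TVar Fn) (scons v (@WVar CD))) in H.
  rewrite !nwshift_ctx_E, pwshift_ctx_E, !nhyp_sub_comp, phyp_sub_comp in H.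
  rewrite !nhyp_sub_id, phyp_sub_id in H. exact H.
Qed.

Lemma act_tinst G D O P u R t :
  act (ntshift_ctx G) (ntshift_ctx D) ((P, u) :: ptshift_ctx O) (rhs_tshift R) ->
  act G D ((ptinst t P, u) :: O) R.
Proof.
  intros H. apply (act_sub (scons t (@TVar Fn)) (@WVar CD)) in H.
  rewrite !ntshift_ctx_E, ptshift_ctx_E, rhs_tshift_E, !nhyp_sub_comp in H.
  cbn [map phyp_sub fst snd] in H.
  rewrite phyp_sub_comp, rhs_sub_comp, wsub_id, nhyp_sub_id, nhyp_sub_id in H.
  rewrite phyp_sub_id, rhs_sub_id in H. exact H.
Qed.

Lemma act_winst G D O P u R v :
  act (nwshift_ctx G) (nwshift_ctx D) ((P, wshift u) :: pwshift_ctx O) (rhs_wshift R) ->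
  act G D ((pwinst v P, u) :: O) R.
Proof.
  intros H. apply (act_sub (@TVar Fn) (scons v (@WVar CD))) in H.
  rewrite !nwshift_ctx_E, pwshift_ctx_E, rhs_wshift_E, !nhyp_sub_comp in H.
  cbn [map phyp_sub fst snd] in H.
  rewrite phyp_sub_comp, rhs_sub_comp, wsub_inst_wshift, nhyp_sub_id, nhyp_sub_id in H.
  rewrite phyp_sub_id, rhs_sub_id in H. exact H.
Qed.

Lemma act_tshift G D O R : act G D O R ->
  act (ntshift_ctx G) (ntshift_ctx D) (ptshift_ctx O) (rhs_tshift R).
Proof. rewrite !ntshift_ctx_E, ptshift_ctx_E, rhs_tshift_E; apply act_sub. Qed.

Lemma act_wshift G D O R : act G D O R ->
  act (nwshift_ctx G) (nwshift_ctx D) (pwshift_ctx O) (rhs_wshift R).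
Proof. apply act_sub. Qed.

Lemma rfoc_tshift G D P w : rfoc G D P w ->
  rfoc (ntshift_ctx G) (ntshift_ctx D) (ptshift P) w.
Proof.
  intros H. apply (rfoc_sub tvar_succ (@WVar CD)) in H.
  rewrite wsub_id in H. rewrite !ntshift_ctx_E. exact H.
Qed.

Lemma rfoc_wshift G D P w : rfoc G D P w ->
  rfoc (nwshift_ctx G) (nwshift_ctx D) (pwshift P) (wshift w).
Proof. apply rfoc_sub. Qed.

Definition act_RN_premise G D N u : Prop :=
  match N with
  | NAtom n ts => act G D [] (RP (PPos (NAtom n ts)) u)
  | NWith N M => act G D [] (RN N u) /\ act G D [] (RN M u)
  | NTop => True
  | NLolli P N => act G D [(P, u)] (RN N u)
  | NAllT N => act (ntshift_ctx G) (ntshift_ctx D) [] (RN N u)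
  | NAllW N => act (nwshift_ctx G) (nwshift_ctx D) [] (RN N (wshift u))
  | NDown N => act G D [] (RN (nwinst u N) u)
  | NAt N v => act G D [] (RN N v)
  | NNeg P => act G D [] (RP P u)
  end.

Lemma act_RN_premise_perm G D D' N u :
  Permutation D D' -> act_RN_premise G D N u -> act_RN_premise G D' N u.
Proof.
  intros Hp; destruct N; simpl; try solve [eauto using a_perm, Permutation_map];
  intros []; eauto using a_perm.
Qed.

Lemma act_RN_inv G D N u : act G D [] (RN N u) -> act_RN_premise G D N u.
Proof.
  intros H; remember [] as O eqn:EO; remember (RN N u) as R eqn:ER.
  revert N u ER; induction H; intros N0 u0 ER; subst; try discriminate;
    try (injection ER; intros; subst); simpl; auto.
  apply Permutation_sym, Permutation_nil in H0 as ->.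
  eapply act_RN_premise_perm; eauto.
Qed.

Definition rfoc_premise G D P w : Prop :=
  match P with
  | PAtom p ts => exists u, Permutation D [(NNeg (PAtom p ts), u)] /\ weq u w /\ pol p = true
  | PTensor P Q => exists D1 D2, Permutation D (D1 ++ D2) /\ rfoc G D1 P w /\ rfoc G D2 Q w
  | POne => D = []
  | PPlus P Q => rfoc G D P w \/ rfoc G D Q w
  | PZero => False
  | PBang N => D = [] /\ act G [] [] (RN N w)
  | PExT P => exists t, rfoc G D (ptinst t P) w
  | PExW P => exists v, rfoc G D (pwinst v P) w
  | PDown P => rfoc G D (pwinst w P) w
  | PAt P u => rfoc G D P u
  | PPos N => act G D [] (RN N w)
  end.

Lemma rfoc_inv G D P w : rfoc G D P w -> rfoc_premise G D P w.
Proof.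
  induction 1; simpl in *; eauto 6.
  destruct P; simpl in *; try solve [eauto using r_perm, a_perm].
  - destruct IHrfoc as [u0 [Hp Hw]]. exists u0; split; auto.
    eauto using Permutation_trans, Permutation_sym.
  - destruct IHrfoc as [D1 [D2 [Hp HD]]]. exists D1, D2; split; auto.
    eauto using Permutation_trans, Permutation_sym.
  - subst; apply Permutation_nil in H; auto.
  - destruct IHrfoc; eauto using r_perm.
  - destruct IHrfoc as [-> HN]; split; auto; apply Permutation_nil in H; auto.
  - destruct IHrfoc as [t Ht]; eauto using r_perm.
  - destruct IHrfoc as [v Hv]; eauto using r_perm.
Qed.

Lemma lfoc_negL_inv G D P u Q w : lfoc G D (NNeg P) u Q w -> act G D [(P, u)] (RP Q w).
Proof.
  intros H; remember (NNeg P) as N eqn:EN; revert P EN.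
  induction H; intros P0 EN; try discriminate; eauto using a_perm.
  injection EN as ->; auto.
Qed.

Lemma act_lp_inv G D p ts u Q w :
  act G D [(PAtom p ts, u)] (RP Q w) -> act G ((NNeg (PAtom p ts), u) :: D) [] (RP Q w).
Proof.
  intros H; remember [(PAtom p ts, u)] as O eqn:EO; remember (RP Q w) as R eqn:ER.
  revert EO ER; induction H; intros EO ER; subst; try discriminate.
  all: try (injection EO; intros; subst; discriminate).
  - apply Permutation_sym, Permutation_length_1_inv in H0; subst.
    eapply a_perm; [apply perm_skip; eauto | apply Permutation_refl | auto].
  - injection EO; intros; subst; auto.
Qed.

Lemma neg_atom_dec N :
  {p & {ts | N = NNeg (PAtom p ts)}} + (forall p ts, N <> NNeg (PAtom p ts)).
Proof.
  destruct N; try (right; discriminate).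
  destruct P; try (right; discriminate). left; eauto.
Qed.

Lemma pos_atom_dec P :
  {n & {ts | P = PPos (NAtom n ts)}} + (forall n ts, P <> PPos (NAtom n ts)).
Proof.
  destruct P; try (right; discriminate).
  destruct N; try (right; discriminate). left; eauto.
Qed.

Lemma npsub_not_neg_atom N st sw :
  (forall p ts, N <> NNeg (PAtom p ts)) -> forall p ts, npsub st sw N <> NNeg (PAtom p ts).
Proof.
  intros HN p ts E. destruct N; try discriminate.
  destruct P; try discriminate. eapply HN; eauto.
Qed.

Lemma focused_pos_atom_weq :
  (forall G D O R, act G D O R -> forall n ts u u', R = RP (PPos (NAtom n ts)) u -> weq u u' ->
     act G D O (RP (PPos (NAtom n ts)) u')) /\
  (forall G D N v Q w, lfoc G D N v Q w -> forall n ts w', Q = PPos (NAtom n ts) -> weq w w' ->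
     lfoc G D N v Q w') /\
  (forall G D P w, rfoc G D P w -> True).
Proof.
  apply focused_ind; intros; subst; try discriminate; auto;
  repeat match goal with E : RP _ _ = RP _ _ |- _ => injection E; intros; subst; clear E end;
  try solve [econstructor; eauto].
  - apply a_exTL. eapply H; [reflexivity | auto].
  - apply a_exWL. eapply H; [reflexivity | apply weq_wsub; auto].
  - exfalso; eapply n; eauto.
  - apply l_li; eauto using weq_trans.
Qed.

Lemma act_pos_atom_weq G D O n ts u u' :
  act G D O (RP (PPos (NAtom n ts)) u) -> weq u u' -> act G D O (RP (PPos (NAtom n ts)) u').
Proof. intros; eapply focused_pos_atom_weq; eauto. Qed.

(* If a linear hypothesis [x] can be traded for the hypotheses [Y] where it is actually
   consumed, by a left focus or by the axiom ri, then it can be traded everywhere. *)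
Section ReplaceHyp.
Variable repl : list nh -> nh -> list nh -> Prop.
Hypothesis repl_sub : forall G x Y st sw, repl G x Y ->
  repl (map (nhyp_sub st sw) G) (nhyp_sub st sw x) (map (nhyp_sub st sw) Y).
Hypothesis repl_weaken : forall G G' x Y, repl G x Y -> incl G G' -> repl G' x Y.
Hypothesis repl_lf : forall G N u Y D Q w, repl G (N, u) Y ->
  (forall p ts, N <> NNeg (PAtom p ts)) -> lfoc G D N u Q w -> act G (Y ++ D) [] (RP Q w).
Hypothesis repl_ri : forall G p ts u Y w, repl G (NNeg (PAtom p ts), u) Y -> weq u w ->
  pol p = true -> rfoc G Y (PAtom p ts) w.

Ltac replace_shifted IH Hp :=
  rewrite ?ntshift_ctx_E, ?ptshift_ctx_E, ?rhs_tshift_E,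
          ?nwshift_ctx_E, ?pwshift_ctx_E, ?rhs_wshift_E in *;
  rewrite map_app; eapply IH;
  [ eapply (Permutation_map (nhyp_sub _ _)) in Hp; exact Hp | apply repl_sub; auto ].

Lemma focused_replace_hyp :
  (forall G D O R, act G D O R -> forall x D0 Y, Permutation D (x :: D0) -> repl G x Y ->
     act G (Y ++ D0) O R) /\
  (forall G D N u Q w, lfoc G D N u Q w -> forall x D0 Y, Permutation D (x :: D0) ->
     repl G x Y -> lfoc G (Y ++ D0) N u Q w) /\
  (forall G D P w, rfoc G D P w -> forall x D0 Y, Permutation D (x :: D0) -> repl G x Y ->
     rfoc G (Y ++ D0) P w).
Proof.
  apply focused_ind; intros;
  try solve [econstructor; eauto];
  try solve [match goal with Hp : Permutation [] (_ :: _) |- _ =>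
               apply Permutation_nil in Hp; discriminate end].
  - eapply a_perm; [apply Permutation_refl | eauto | ]. eauto using Permutation_trans.
  - apply a_exTL. replace_shifted H H0.
  - apply a_exWL. replace_shifted H H0.
  - apply a_bangL. eapply H; eauto. eapply repl_weaken; eauto using incl_tl, incl_refl.
  - apply a_posL. eapply a_perm; [symmetry; apply Permutation_middle | apply Permutation_refl | ].
    eapply H; eauto. apply (Permutation_cons_app_middle [_]); auto.
  - apply a_lp; auto.
    eapply a_perm; [symmetry; apply Permutation_middle | apply Permutation_refl | ].
    eapply H; eauto. apply (Permutation_cons_app_middle [_]); auto.
  - apply a_allTR. replace_shifted H H0.
  - apply a_allWR. replace_shifted H H0.
  - destruct (Permutation_cons_split H0) as [[<- Hp] | [D1 [Hp1 Hp2]]].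
    + eapply a_perm; [apply Permutation_app_head, Hp | apply Permutation_refl | eauto].
    + eapply a_perm; [ | apply Permutation_refl | apply a_lf; [auto | eapply H; eauto]].
      rewrite Hp2; apply Permutation_middle.
  - eauto using Permutation_trans.
  - destruct (Permutation_app_cons_split _ _ H1) as [[D1 [Hp1 Hp2]] | [D1 [Hp1 Hp2]]].
    + eapply l_perm; [ | eapply l_lolliL; [eapply H; eauto | eauto]].
      rewrite Hp2, app_assoc; auto.
    + eapply l_perm; [ | eapply l_lolliL; [eauto | eapply H0; eauto]].
      rewrite Hp2, !app_assoc. apply Permutation_app_tail, Permutation_app_comm.
  - eauto using Permutation_trans.
  - apply Permutation_length_1_inv in H as [= -> ->].
    rewrite app_nil_r; eauto.
  - destruct (Permutation_app_cons_split _ _ H1) as [[D1 [Hp1 Hp2]] | [D1 [Hp1 Hp2]]].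
    + eapply r_perm; [ | eapply r_tensorR; [eapply H; eauto | eauto]].
      rewrite Hp2, app_assoc; auto.
    + eapply r_perm; [ | eapply r_tensorR; [eauto | eapply H0; eauto]].
      rewrite Hp2, !app_assoc. apply Permutation_app_tail, Permutation_app_comm.
Qed.

Lemma act_replace_hyp G x D O R Y : act G (x :: D) O R -> repl G x Y -> act G (Y ++ D) O R.
Proof. intros; eapply focused_replace_hyp; eauto. Qed.

End ReplaceHyp.

Lemma act_neg_atom_weq G D O R p ts u u' :
  act G ((NNeg (PAtom p ts), u) :: D) O R -> weq u' u -> act G ((NNeg (PAtom p ts), u') :: D) O R.
Proof.
  intros H Hu. change ((NNeg (PAtom p ts), u') :: D) with ([(NNeg (PAtom p ts), u')] ++ D).
  refine (@act_replace_hyp (fun _ x Y => exists p ts u u',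
            x = (NNeg (PAtom p ts), u) /\ Y = [(NNeg (PAtom p ts), u')] /\ weq u' u)
            _ _ _ _ _ _ _ _ _ _ H _); [ | | | | eauto 7].
  - intros G0 x Y st sw [p0 [ts0 [u0 [u1 [-> [-> E]]]]]].
    exists p0, (map (tsub st) ts0), (wsub sw u0), (wsub sw u1); eauto using weq_wsub.
  - auto.
  - intros G0 N u0 Y D0 Q w [p0 [ts0 [u1 [u2 [[= -> ->] _]]]]] Hn. exfalso; eapply Hn; eauto.
  - intros G0 p0 ts0 u0 Y w [p1 [ts1 [u1 [u2 [[= <- <- <-] [-> E]]]]]] Hw Hp.
    apply r_ri; eauto using weq_trans.
Qed.

Lemma act_lfoc G D N u Q w : lfoc G D N u Q w -> act G ((N, u) :: D) [] (RP Q w).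
Proof.
  intros H. destruct (neg_atom_dec N) as [[p [ts ->]] | HN].
  - apply act_lp_inv, lfoc_negL_inv, H.
  - apply a_lf; auto.
Qed.

(* [rcont G P u D O R]: any right focus on [P @ u] extends, by the linear hypotheses [D],
   to a proof of [O ==> R].  Closing under substitutions and weakenings of the
   unrestricted context lets it pass under the binders and [!L] of a derivation. *)
Definition rcont G P u D O R : Prop :=
  forall st sw G' Dx, incl (map (nhyp_sub st sw) G) G' ->
    rfoc G' Dx (ppsub st sw P) (wsub sw u) ->
    act G' (Dx ++ map (nhyp_sub st sw) D) (map (phyp_sub st sw) O) (rhs_sub st sw R).

Lemma rcont_apply G G' P u D O R Dx :
  rcont G P u D O R -> incl G G' -> rfoc G' Dx P u -> act G' (Dx ++ D) O R.
Proof.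
  intros HK Hi Hr. specialize (HK (@TVar Fn) (@WVar CD) G' Dx).
  rewrite nhyp_sub_id, nhyp_sub_id, phyp_sub_id, rhs_sub_id, ppsub_id, wsub_id in HK. auto.
Qed.

Lemma rcont_sub G P u D O R st sw : rcont G P u D O R ->
  rcont (map (nhyp_sub st sw) G) (ppsub st sw P) (wsub sw u) (map (nhyp_sub st sw) D)
        (map (phyp_sub st sw) O) (rhs_sub st sw R).
Proof.
  intros HK st2 sw2 G' Dx.
  rewrite !nhyp_sub_comp, phyp_sub_comp, rhs_sub_comp, ppsub_comp, wsub_comp. apply HK.
Qed.

Lemma rcont_weaken G G' P u D O R : rcont G P u D O R -> incl G G' -> rcont G' P u D O R.
Proof. intros HK Hi st sw G'' Dx Hi'. apply HK. eauto using incl_tran, incl_map. Qed.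

Lemma rcont_tshift G P u D O R : rcont G P u D O R ->
  rcont (ntshift_ctx G) (ptshift P) u (ntshift_ctx D) (ptshift_ctx O) (rhs_tshift R).
Proof.
  intros HK. pose proof (rcont_sub tvar_succ (@WVar CD) HK) as H.
  rewrite wsub_id in H. rewrite !ntshift_ctx_E, ptshift_ctx_E, rhs_tshift_E. exact H.
Qed.

Lemma rcont_wshift G P u D O R : rcont G P u D O R ->
  rcont (nwshift_ctx G) (pwshift P) (wshift u) (nwshift_ctx D) (pwshift_ctx O) (rhs_wshift R).
Proof. apply rcont_sub. Qed.

Definition pos_neg_atom P : Prop := exists n ts, P = PPos (NAtom n ts) /\ pol n = false.

Lemma ppsub_not_pos_neg_atom P st sw : ~ pos_neg_atom P -> ~ pos_neg_atom (ppsub st sw P).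
Proof.
  intros HP [n [ts [E Hn]]]. destruct P; try discriminate.
  destruct N; try discriminate. injection E as -> _. apply HP; do 2 eexists; eauto.
Qed.

(* A stable derivation of [P] followed by the continuation: the continuation is pushed
   up to the places where [P] is right-focused. *)
Lemma focused_rcont :
  (forall G D O R, act G D O R -> forall P u E Q w, R = RP P u -> ~ pos_neg_atom P ->
     rcont G P u E [] (RP Q w) -> act G (D ++ E) O (RP Q w)) /\
  (forall G D M v P u, lfoc G D M v P u -> forall E Q w, ~ pos_neg_atom P ->
     rcont G P u E [] (RP Q w) -> lfoc G (D ++ E) M v Q w) /\
  (forall G D P w, rfoc G D P w -> True).
Proof.
  apply focused_ind; intros; subst; try discriminate; auto;
  repeat match goal with Ee : RP _ _ = RP _ _ |- _ => injection Ee; intros; subst; clear Ee end.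
  all: try solve [econstructor; eauto].
  - eapply a_perm; [apply Permutation_app_tail; eauto | eauto | eauto].
  - apply a_exTL. rewrite ntshift_ctx_app.
    eapply H; [reflexivity | apply ppsub_not_pos_neg_atom; auto | exact (rcont_tshift H2)].
  - apply a_exWL. rewrite nwshift_ctx_app.
    eapply H; [reflexivity | apply ppsub_not_pos_neg_atom; auto | exact (rcont_wshift H2)].
  - apply a_bangL. eapply H; eauto. eapply rcont_weaken; eauto using incl_tl, incl_refl.
  - eapply rcont_apply; eauto using incl_refl.
  - eapply l_perm; [apply Permutation_app_tail; eauto | eauto].
  - exfalso; apply H; do 2 eexists; eauto.
  - rewrite <- app_assoc. eapply l_lolliL; eauto.
Qed.

Lemma act_stable_rcont G D P u E Q w :
  act G D [] (RP P u) -> rcont G P u E [] (RP Q w) -> act G (D ++ E) [] (RP Q w).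
Proof.
  intros H HK. destruct (pos_atom_dec P) as [[n [ts ->]] | HP].
  - destruct (pol n) eqn:Hn.
    + eapply focused_rcont; eauto. intros [n' [ts' [[= <- <-] Hn']]]; congruence.
    + eapply rcont_apply; eauto using incl_refl. apply r_posR, a_rp; auto.
  - eapply focused_rcont; eauto. intros [n [ts [E' _]]]; eapply HP; eauto.
Qed.

(** * Cut admissibility *)

Lemma act_stable_cut_neg_atom G D D1 D2 Q w p ts u :
  act G D [] (RP Q w) -> Permutation D ((NNeg (PAtom p ts), u) :: D2) ->
  act G D1 [] (RP (PAtom p ts) u) -> act G (D1 ++ D2) [] (RP Q w).
Proof.
  intros H Hp H1. eapply act_stable_rcont; eauto. intros st sw G' Dz Hi Hr.
  destruct (rfoc_inv Hr) as [u0 [HD [Hw _]]].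
  eapply a_perm; [apply Permutation_app_tail; symmetry; eauto | apply Permutation_refl | ].
  apply act_neg_atom_weq with (u := wsub sw u); auto.
  eapply act_sub_weaken in H; eauto. eapply a_perm; [ | apply Permutation_refl | exact H].
  apply (Permutation_map (nhyp_sub st sw)) in Hp. exact Hp.
Qed.

Ltac shift_perm Hp := first
  [ apply (Permutation_map (nhyp_sub tvar_succ (@WVar _))) in Hp; simpl in Hp;
    rewrite ?wsub_id in Hp; rewrite !ntshift_ctx_E; exact Hp
  | apply (Permutation_map (nhyp_sub (@TVar _) wvar_succ)) in Hp; exact Hp ].

Lemma act_cut_neg_atom G D O R p ts u D1 D2 : act G D O R ->
  Permutation D ((NNeg (PAtom p ts), u) :: D2) -> act G D1 [] (RP (PAtom p ts) u) ->
  act G (D1 ++ D2) O R.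
Proof.
  intros H; revert p ts u D1 D2; induction H; intros p0 ts0 u0 D1 D2 HD Hat;
    try solve [constructor; eauto | eapply act_stable_cut_neg_atom; eauto using a_lf, a_cplf, a_rf].
  - eapply a_perm; [apply Permutation_refl | eauto | ]. eauto using Permutation_trans.
  - apply a_exTL. rewrite ntshift_ctx_app. eapply IHact; [shift_perm HD | exact (act_tshift Hat)].
  - apply a_exWL. rewrite nwshift_ctx_app. eapply IHact; [shift_perm HD | exact (act_wshift Hat)].
  - apply a_bangL. eapply IHact; eauto. eapply act_weaken; eauto using incl_tl, incl_refl.
  - apply a_posL. eapply a_perm; [symmetry; apply Permutation_middle | apply Permutation_refl | ].
    eapply IHact; eauto. apply (Permutation_cons_app_middle [_]); auto.
  - apply a_lp; auto.
    eapply a_perm; [symmetry; apply Permutation_middle | apply Permutation_refl | ].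
    eapply IHact; eauto. apply (Permutation_cons_app_middle [_]); auto.
  - apply a_allTR. rewrite ntshift_ctx_app. eapply IHact; [shift_perm HD | exact (act_tshift Hat)].
  - apply a_allWR. rewrite nwshift_ctx_app. eapply IHact; [shift_perm HD | exact (act_wshift Hat)].
Qed.

(* At a fixed size of the cut formula, the cut of a right-active [N] against a left focus
   on [N], and the cut of a right focus on [P] against an active [P], only need cuts on
   strictly smaller formulas; cuts of [N] into the linear or unrestricted context reduce to
   the first kind at the same size. *)
Definition cut_pos_at n := forall G D1 D2 P u O R, psize P = n -> rfoc G D1 P u ->
  act G D2 ((P, u) :: O) R -> act G (D1 ++ D2) O R.
Definition cut_principal_le n := forall G D1 D2 N u Q w, nsize N <= n ->
  act G D1 [] (RN N u) -> lfoc G D2 N u Q w -> act G (D1 ++ D2) [] (RP Q w).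
Definition cut_neg_at n := forall G D1 D2 N u O R, nsize N = n -> act G D1 [] (RN N u) ->
  act G ((N, u) :: D2) O R -> act G (D1 ++ D2) O R.
Definition cut_bang_at n := forall G N u D O R, nsize N = n -> act G [] [] (RN N u) ->
  act ((N, u) :: G) D O R -> act G D O R.

Lemma cut_principal_step n : (forall m, m < n -> cut_pos_at m) -> cut_principal_le n.
Proof.
  intros IH G D1 D2 N u Q w Hs H1 H2. revert D1 H1 Hs.
  induction H2; intros D1 H1 Hs.
  { eapply a_perm; [apply Permutation_app_head; eauto | apply Permutation_refl | eauto]. }
  all: apply act_RN_inv in H1; simpl in H1, Hs.
  - rewrite app_nil_r. eapply act_pos_atom_weq; eauto.
  - eapply act_stable_rcont; eauto. intros st sw G' Dz Hi Hr.
    eapply (IH (psize P)); [lia | apply psize_sub | exact Hr | exact (act_sub_weaken _ _ H Hi)].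
  - destruct H1. apply IHlfoc; auto; lia.
  - destruct H1. apply IHlfoc; auto; lia.
  - eapply (IH (psize P)) in H1; [ | lia | reflexivity | eauto].
    eapply a_perm; [ | apply Permutation_refl | apply IHlfoc; [exact H1 | lia]].
    rewrite !app_assoc. apply Permutation_app_tail, Permutation_app_comm.
  - eapply act_tinst_rhs with (t := t) (O := []) in H1. simpl in H1. rewrite wsub_id in H1.
    apply IHlfoc; auto. unfold ntinst; rewrite nsize_sub; lia.
  - eapply act_winst_rhs with (v := v) (O := []) in H1. simpl in H1. rewrite wsub_inst_wshift in H1.
    apply IHlfoc; auto. unfold nwinst; rewrite nsize_sub; lia.
  - apply IHlfoc; auto. unfold nwinst; rewrite nsize_sub; lia.
  - apply IHlfoc; auto; lia.
Qed.

Lemma cut_neg_step n : cut_principal_le n -> cut_neg_at n.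
Proof.
  intros Hc G D1 D2 N u O R Hs H1 H2.
  destruct (neg_atom_dec N) as [[p [ts ->]] | HN].
  - apply act_RN_inv in H1. eapply act_cut_neg_atom; eauto.
  - refine (@act_replace_hyp (fun G x Y => exists N u, x = (N, u) /\
              (forall p ts, N <> NNeg (PAtom p ts)) /\ nsize N <= n /\ act G Y [] (RN N u))
              _ _ _ _ _ _ _ _ _ _ H2 _); [ | | | | exists N, u; repeat split; auto; lia].
    + intros G0 x Y st sw [N0 [u0 [-> [HN0 [Hs0 H0]]]]].
      exists (npsub st sw N0), (wsub sw u0); repeat split.
      * apply npsub_not_neg_atom; auto.
      * rewrite nsize_sub; auto.
      * exact (act_sub st sw H0).
    + intros G0 G1 x Y [N0 [u0 [-> [HN0 [Hs0 H0]]]]] Hi.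
      exists N0, u0; repeat split; eauto using act_weaken.
    + intros G0 N0 u0 Y Dl Q w [N1 [u1 [[= <- <-] [_ [Hs1 H0]]]]] _ Hl. eapply Hc; eauto.
    + intros G0 p ts u0 Y w [N1 [u1 [[= <- <-] [HN1 _]]]]. exfalso; eapply HN1; eauto.
Qed.

Lemma cut_bang_gen n : cut_principal_le n ->
  (forall G' D O R, act G' D O R -> forall G N u, incl G' ((N, u) :: G) -> nsize N <= n ->
     act G [] [] (RN N u) -> act G D O R) /\
  (forall G' D M v Q w, lfoc G' D M v Q w -> forall G N u, incl G' ((N, u) :: G) ->
     nsize N <= n -> act G [] [] (RN N u) -> lfoc G D M v Q w) /\
  (forall G' D P w, rfoc G' D P w -> forall G N u, incl G' ((N, u) :: G) -> nsize N <= n ->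
     act G [] [] (RN N u) -> rfoc G D P w).
Proof.
  intros Hc. apply focused_ind; intros; try solve [econstructor; eauto].
  - apply a_exTL. eapply H; [ | rewrite nsize_sub | exact (act_tshift H2)]; auto.
    apply (incl_map (fun h => (ntshift (fst h), snd h))) in H0; exact H0.
  - apply a_exWL. eapply H; [ | rewrite nsize_sub | exact (act_wshift H2)]; auto.
    apply (incl_map (fun h => (nwshift (fst h), wshift (snd h)))) in H0; exact H0.
  - apply a_bangL. eapply H; [ | eauto | eapply act_weaken; eauto using incl_tl, incl_refl].
    intros z [<- | Hz]; [right; left; auto | destruct (H0 z Hz); [left | right; right]; auto].
  - apply a_allTR. eapply H; [ | rewrite nsize_sub | exact (act_tshift H2)]; auto.
    apply (incl_map (fun h => (ntshift (fst h), snd h))) in H0; exact H0.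
  - apply a_allWR. eapply H; [ | rewrite nsize_sub | exact (act_wshift H2)]; auto.
    apply (incl_map (fun h => (nwshift (fst h), wshift (snd h)))) in H0; exact H0.
  - destruct (H0 _ i) as [[= <- <-] | Hi].
    + apply (Hc _ [] _ N0 u0); eauto.
    + eapply a_cplf; eauto.
Qed.

Lemma cut_bang_step n : cut_principal_le n -> cut_bang_at n.
Proof.
  intros Hc G N u D O R Hs H1 H2. eapply (proj1 (cut_bang_gen Hc)); eauto using incl_refl; lia.
Qed.

Definition act_active_premise G D P u O R : Prop :=
  match P with
  | PAtom p ts => act G ((NNeg (PAtom p ts), u) :: D) O R
  | PTensor P Q => act G D ((P, u) :: (Q, u) :: O) R
  | POne => act G D O R
  | PPlus P Q => act G D ((P, u) :: O) R /\ act G D ((Q, u) :: O) R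
  | PZero => True
  | PBang N => act ((N, u) :: G) D O R
  | PExT P => act (ntshift_ctx G) (ntshift_ctx D) ((P, u) :: ptshift_ctx O) (rhs_tshift R)
  | PExW P =>
      act (nwshift_ctx G) (nwshift_ctx D) ((P, wshift u) :: pwshift_ctx O) (rhs_wshift R)
  | PDown P => act G D ((pwinst u P, u) :: O) R
  | PAt P v => act G D ((P, v) :: O) R
  | PPos N => act G ((N, u) :: D) O R
  end.

Lemma cut_pos_principal n :
  (forall m, m < n -> cut_bang_at m) -> (forall m, m < n -> cut_neg_at m) ->
  (forall m, m < n -> cut_pos_at m) ->
  forall G D P u O R Dc, psize P = n -> rfoc G Dc P u -> act_active_premise G D P u O R ->
    act G (Dc ++ D) O R.
Proof.
  intros CB CN CP G D P u O R Dc Hs Hr H.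
  apply rfoc_inv in Hr; destruct P; simpl in Hs, Hr, H.
  - destruct Hr as [u0 [HD [Hw _]]]. eapply act_neg_atom_weq in H; [ | exact Hw].
    eapply a_perm; [rewrite HD; apply Permutation_refl | apply Permutation_refl | exact H].
  - destruct Hr as [Da [Db [HD [Ha Hb]]]].
    eapply (CP (psize P1)) in H; [ | lia | reflexivity | exact Ha].
    eapply (CP (psize P2)) in H; [ | lia | reflexivity | exact Hb].
    eapply a_perm; [ | apply Permutation_refl | exact H].
    rewrite HD, app_assoc. apply Permutation_app_tail, Permutation_app_comm.
  - subst; exact H.
  - destruct H as [H1 H2], Hr as [Ha | Ha].
    + eapply (CP (psize P1)); eauto; lia.
    + eapply (CP (psize P2)); eauto; lia.
  - contradiction.
  - destruct Hr as [-> HN]. eapply (CB (nsize N)); eauto; lia.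
  - destruct Hr as [t Ht]. apply act_tinst with (t := t) in H.
    exact (CP (psize P) ltac:(lia) _ _ _ _ _ _ _ (psize_sub _ _ _) Ht H).
  - destruct Hr as [v Hv]. apply act_winst with (v := v) in H.
    exact (CP (psize P) ltac:(lia) _ _ _ _ _ _ _ (psize_sub _ _ _) Hv H).
  - exact (CP (psize P) ltac:(lia) _ _ _ _ _ _ _ (psize_sub _ _ _) Hr H).
  - eapply (CP (psize P)); eauto; lia.
  - eapply (CN (nsize N)); eauto; lia.
Qed.

Ltac commute_active rule Hp2 pre IH :=
  eapply a_perm; [apply Permutation_refl | symmetry; exact Hp2 | ];
  apply rule; eapply IH; eauto; apply (Permutation_cons_app_middle pre); auto.

(* Either the last rule decomposes the cut formula ([cut_pos_principal]) or the cut
   commutes with it. *)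
Lemma cut_pos_gen n :
  (forall m, m < n -> cut_bang_at m /\ cut_neg_at m /\ cut_pos_at m) ->
  forall G D O' R, act G D O' R -> forall Pc uc Oc Dc, psize Pc = n ->
    Permutation O' ((Pc, uc) :: Oc) -> rfoc G Dc Pc uc -> act G (Dc ++ D) Oc R.
Proof.
  intros IH.
  assert (CB : forall m, m < n -> cut_bang_at m) by (intros; apply IH; auto).
  assert (CN : forall m, m < n -> cut_neg_at m) by (intros; apply IH; auto).
  assert (CP : forall m, m < n -> cut_pos_at m) by (intros; apply IH; auto).
  clear IH.
  induction 1; intros Pc uc Oc Dc Hs Hp Hr;
    try (destruct (Permutation_cons_split Hp) as [[[= <- <-] Hp'] | [l [Hp1 Hp2]]];
         [ eapply a_perm; [apply Permutation_refl | exact Hp' | ];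
           eapply (cut_pos_principal CB CN CP); [exact Hs | exact Hr | simpl; auto] | ]).
  - eapply a_perm; [apply Permutation_app_head; eauto | apply Permutation_refl | ].
    eauto using Permutation_trans.
  - commute_active a_tensorL Hp2 [(P, u); (Q, u)] IHact.
  - commute_active a_oneL Hp2 (@nil ph) IHact.
  - eapply a_perm; [apply Permutation_refl | symmetry; exact Hp2 | ]. apply a_plusL.
    + eapply IHact1; eauto. apply (Permutation_cons_app_middle [_]); auto.
    + eapply IHact2; eauto. apply (Permutation_cons_app_middle [_]); auto.
  - commute_active a_downLA Hp2 [(pwinst v P, v)] IHact.
  - commute_active a_atLA Hp2 [(P, u)] IHact.
  - eapply a_perm; [apply Permutation_refl | symmetry; exact Hp2 | ]. apply a_exTL.
    rewrite ntshift_ctx_app. eapply IHact with (Pc := ptshift Pc).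
    + unfold ptshift; rewrite psize_sub; auto.
    + apply (Permutation_cons_app_middle [_]).
      apply (Permutation_map (fun h => (ptshift (fst h), snd h))) in Hp1. exact Hp1.
    + apply rfoc_tshift; auto.
  - eapply a_perm; [apply Permutation_refl | symmetry; exact Hp2 | ]. apply a_exWL.
    rewrite nwshift_ctx_app. eapply IHact with (Pc := pwshift Pc).
    + unfold pwshift; rewrite psize_sub; auto.
    + apply (Permutation_cons_app_middle [_]).
      apply (Permutation_map (fun h => (pwshift (fst h), wshift (snd h)))) in Hp1. exact Hp1.
    + apply rfoc_wshift; auto.
  - eapply a_perm; [apply Permutation_refl | symmetry; exact Hp2 | ]. apply a_bangL.
    eapply IHact; eauto. eapply rfoc_weaken; eauto using incl_tl, incl_refl.
  - eapply a_perm; [apply Permutation_refl | symmetry; exact Hp2 | ]. apply a_posL.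
    eapply a_perm; [symmetry; apply Permutation_middle | apply Permutation_refl | ].
    eapply IHact; eauto.
  - eapply a_perm; [apply Permutation_refl | symmetry; exact Hp2 | ]. apply a_lp; auto.
    eapply a_perm; [symmetry; apply Permutation_middle | apply Permutation_refl | ].
    eapply IHact; eauto.
  - eapply a_perm; [apply Permutation_refl | symmetry; exact Hp2 | ]. apply a_zeroL.
  - apply a_withR; eauto.
  - apply a_topR.
  - apply a_lolliR. eapply IHact; eauto. apply (Permutation_cons_app_middle [_]); auto.
  - apply a_downRA; eauto.
  - apply a_atRA; eauto.
  - apply a_allTR. rewrite ntshift_ctx_app. eapply IHact with (Pc := ptshift Pc).
    + unfold ptshift; rewrite psize_sub; auto.
    + apply (Permutation_map (fun h => (ptshift (fst h), snd h))) in Hp. exact Hp.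
    + apply rfoc_tshift; auto.
  - apply a_allWR. rewrite nwshift_ctx_app. eapply IHact with (Pc := pwshift Pc).
    + unfold pwshift; rewrite psize_sub; auto.
    + apply (Permutation_map (fun h => (pwshift (fst h), wshift (snd h)))) in Hp. exact Hp.
    + apply rfoc_wshift; auto.
  - apply a_negR; eauto.
  - apply a_rp; eauto.
  - apply Permutation_nil in Hp; discriminate.
  - apply Permutation_nil in Hp; discriminate.
  - apply Permutation_nil in Hp; discriminate.
Qed.

Lemma cut_admissible n :
  cut_principal_le n /\ cut_neg_at n /\ cut_bang_at n /\ cut_pos_at n.
Proof.
  induction n as [n IHn] using (well_founded_induction Wf_nat.lt_wf).
  assert (Hp : cut_principal_le n).
  { apply cut_principal_step; intros m Hm; apply IHn; auto. }
  repeat split; auto using cut_neg_step, cut_bang_step.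
  intros G D1 D2 P u O R Hs Hr H. eapply cut_pos_gen; eauto.
  intros m Hm; destruct (IHn m Hm) as [? [? [? ?]]]; auto.
Qed.

Lemma act_cut G D1 D2 N u O R :
  act G D1 [] (RN N u) -> act G ((N, u) :: D2) O R -> act G (D1 ++ D2) O R.
Proof. intros; eapply (proj1 (proj2 (cut_admissible (nsize N)))); eauto. Qed.

(** * Identity expansion *)

Definition lcont G N u D : Prop :=
  forall st sw G' Dx Q w, incl (map (nhyp_sub st sw) G) G' ->
    lfoc G' Dx (npsub st sw N) (wsub sw u) Q w ->
    act G' (Dx ++ map (nhyp_sub st sw) D) [] (RP Q w).

Lemma lcont_apply G N u D Dx Q w :
  lcont G N u D -> lfoc G Dx N u Q w -> act G (Dx ++ D) [] (RP Q w).
Proof.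
  intros HK Hl. specialize (HK (@TVar Fn) (@WVar CD) G Dx Q w).
  rewrite nhyp_sub_id, nhyp_sub_id, npsub_id, wsub_id in HK. auto using incl_refl.
Qed.

Lemma act_rfoc G D P u : rfoc G D P u -> act G D [] (RP P u).
Proof.
  intros H. destruct (pos_atom_dec P) as [[n [ts ->]] | HP].
  - apply rfoc_inv in H. apply act_RN_inv in H. exact H.
  - apply a_rf; auto.
Qed.

Definition expand_neg_le n := forall N, nsize N <= n -> nwf pol N ->
  forall G D u, lcont G N u D -> act G D [] (RN N u).
Definition expand_pos_le n := forall P, psize P <= n -> pwf pol P ->
  forall G D O R u, rcont G P u D O R -> act G D ((P, u) :: O) R.

Lemma expand_neg_step n : expand_neg_le n -> expand_pos_le n -> expand_neg_le (S n).
Proof.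
  intros IHN IHP N Hs Hw G D u HK. destruct N; simpl in Hs, Hw.
  - apply a_rp; auto. apply (lcont_apply (Dx := []) HK). apply l_li; auto using weq_refl.
  - destruct Hw. apply a_withR; apply IHN; auto; try lia; intros st sw G' Dx Q w Hi Hl;
      apply HK; auto; [apply l_withL1 | apply l_withL2]; auto.
  - apply a_topR.
  - destruct Hw as [HwP HwN]. apply a_lolliR. apply IHP; auto; try lia.
    intros st sw G' Dx Hi Hr. cbn [map rhs_sub].
    apply IHN; [rewrite nsize_sub; lia | apply nwf_sub; auto | ].
    intros st2 sw2 G'' Dy Q w Hi2 Hl.
    specialize (HK (fun n => tsub st2 (st n)) (fun n => wsub sw2 (sw n)) G''
                   (map (nhyp_sub st2 sw2) Dx ++ Dy) Q w).
    eapply a_perm; [ | apply Permutation_refl | apply HK ].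
    + rewrite map_app, nhyp_sub_comp, !app_assoc. apply Permutation_app_tail, Permutation_app_comm.
    + eapply incl_nhyp_sub_comp; eauto.
    + cbn. apply l_lolliL.
      * apply (rfoc_sub st2 sw2) in Hr. rewrite ppsub_comp, wsub_comp in Hr.
        eauto using rfoc_weaken.
      * rewrite npsub_comp, wsub_comp in Hl. exact Hl.
  - apply a_allTR. apply IHN; auto; try lia.
    intros st sw G' Dx Q w Hi Hl.
    assert (Hl' : lfoc G' Dx (NAllT (npsub (up_t (fun n => tsub st (tvar_succ n))) sw N))
                       (wsub sw u) Q w).
    { apply l_allTL with (t := st 0). rewrite ntinst_up_t. exact Hl. }
    rewrite ntshift_ctx_E, nhyp_sub_comp in *. exact (HK _ _ _ _ _ _ Hi Hl').
  - apply a_allWR. apply IHN; auto; try lia.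
    intros st sw G' Dx Q w Hi Hl.
    assert (Hl' : lfoc G' Dx (NAllW (npsub st (up_w (fun n => wsub sw (wvar_succ n))) N))
                       (wsub (fun n => wsub sw (wvar_succ n)) u) Q w).
    { apply l_allWL with (v := sw 0). rewrite nwinst_up_w.
      unfold wshift in Hl. rewrite wsub_comp in Hl. exact Hl. }
    rewrite nwshift_ctx_E, nhyp_sub_comp in *. exact (HK _ _ _ _ _ _ Hi Hl').
  - apply a_downRA. apply IHN; [unfold nwinst; rewrite nsize_sub; lia | apply nwf_sub; auto | ].
    intros st sw G' Dx Q w Hi Hl. apply HK; auto. apply l_downLF.
    rewrite npsub_nwinst in Hl. exact Hl.
  - apply a_atRA. apply IHN; auto; try lia.
    intros st sw G' Dx Q w0 Hi Hl. apply HK; auto. apply l_atLF. exact Hl.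
  - apply a_negR. apply (lcont_apply (Dx := []) HK).
    apply l_negL. apply IHP; auto; try lia.
    intros st sw G' Dx Hi Hr. cbn [map rhs_sub]. rewrite app_nil_r. apply act_rfoc; auto.
Qed.

Lemma expand_pos_step n : expand_neg_le n -> expand_pos_le n -> expand_pos_le (S n).
Proof.
  intros IHN IHP P Hs Hw G D O R u HK. destruct P; simpl in Hs, Hw.
  - apply a_lp; auto. apply (rcont_apply (Dx := [_]) HK); auto using incl_refl.
    apply r_ri; auto using weq_refl.
  - destruct Hw as [Hw1 Hw2]. apply a_tensorL. apply IHP; auto; try lia.
    intros st sw G' Dx Hi Hr. cbn [map phyp_sub fst snd].
    apply IHP; [rewrite psize_sub; lia | apply pwf_sub; auto | ].
    intros st2 sw2 G'' Dy Hi2 Hr2.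
    specialize (HK (fun n => tsub st2 (st n)) (fun n => wsub sw2 (sw n)) G''
                   (map (nhyp_sub st2 sw2) Dx ++ Dy)).
    rewrite phyp_sub_comp, rhs_sub_comp.
    eapply a_perm; [ | apply Permutation_refl | apply HK ].
    + rewrite map_app, nhyp_sub_comp, !app_assoc. apply Permutation_app_tail, Permutation_app_comm.
    + eapply incl_nhyp_sub_comp; eauto.
    + cbn. apply r_tensorR.
      * apply (rfoc_sub st2 sw2) in Hr. rewrite ppsub_comp, wsub_comp in Hr.
        eauto using rfoc_weaken.
      * rewrite ppsub_comp, wsub_comp in Hr2. exact Hr2.
  - apply a_oneL. apply (rcont_apply (Dx := []) HK); auto using incl_refl, r_oneR.
  - destruct Hw as [Hw1 Hw2]. apply a_plusL; apply IHP; auto; try lia;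
      intros st sw G' Dx Hi Hr; apply HK; auto; cbn; [apply r_plusR1 | apply r_plusR2]; auto.
  - apply a_zeroL.
  - apply a_bangL. apply (rcont_apply (Dx := []) HK); [auto using incl_tl, incl_refl | ].
    apply r_bangR. apply IHN; auto; try lia.
    intros st sw G' Dx Q w Hi Hl. rewrite app_nil_r. eapply a_cplf; eauto.
    apply Hi. left; reflexivity.
  - apply a_exTL. apply IHP; auto; try lia.
    intros st sw G' Dx Hi Hr.
    assert (Hr' : rfoc G' Dx (PExT (ppsub (up_t (fun n => tsub st (tvar_succ n))) sw P))
                       (wsub sw u)).
    { apply r_exTR with (t := st 0). rewrite ptinst_up_t. exact Hr. }
    rewrite ntshift_ctx_E, ptshift_ctx_E, rhs_tshift_E, !nhyp_sub_comp, phyp_sub_comp,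
      rhs_sub_comp in *.
    exact (HK _ _ _ _ Hi Hr').
  - apply a_exWL. apply IHP; auto; try lia.
    intros st sw G' Dx Hi Hr.
    assert (Hr' : rfoc G' Dx (PExW (ppsub st (up_w (fun n => wsub sw (wvar_succ n))) P))
                       (wsub (fun n => wsub sw (wvar_succ n)) u)).
    { apply r_exWR with (v := sw 0). rewrite pwinst_up_w.
      unfold wshift in Hr. rewrite wsub_comp in Hr. exact Hr. }
    rewrite nwshift_ctx_E, pwshift_ctx_E, rhs_wshift_E, !nhyp_sub_comp, phyp_sub_comp,
      rhs_sub_comp in *.
    exact (HK _ _ _ _ Hi Hr').
  - apply a_downLA. apply IHP; [unfold pwinst; rewrite psize_sub; lia | apply pwf_sub; auto | ].
    intros st sw G' Dx Hi Hr. apply HK; auto. apply r_downRF.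
    rewrite ppsub_pwinst in Hr. exact Hr.
  - apply a_atLA. apply IHP; auto; try lia.
    intros st sw G' Dx Hi Hr. apply HK; auto. apply r_atRF. exact Hr.
  - apply a_posL. apply (rcont_apply (Dx := [_]) HK); auto using incl_refl.
    apply r_posR. apply IHN; auto; try lia.
    intros st sw G' Dx Q w Hi Hl. cbn [map nhyp_sub fst snd].
    eapply a_perm; [apply Permutation_cons_append | apply Permutation_refl | apply act_lfoc; eauto].
Qed.

Lemma identity_expansion n : expand_neg_le n /\ expand_pos_le n.
Proof.
  induction n as [|n [IHN IHP]].
  - split; intros []; simpl; lia.
  - split; [apply expand_neg_step | apply expand_pos_step]; auto.
Qed.

Lemma act_expand_neg G D N u : nwf pol N -> lcont G N u D -> act G D [] (RN N u).
Proof. intros; eapply (identity_expansion (nsize N)); eauto. Qed.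

Lemma act_expand_pos G D O R P u : pwf pol P -> rcont G P u D O R -> act G D ((P, u) :: O) R.
Proof. intros; eapply (identity_expansion (psize P)); eauto. Qed.

Lemma act_copy G N u : nwf pol N -> In (N, u) G -> act G [] [] (RN N u).
Proof.
  intros Hw Hin. apply act_expand_neg; auto. intros st sw G' Dx Q w Hi Hl.
  rewrite app_nil_r. eapply a_cplf; eauto. apply Hi, in_map_iff. exists (N, u); auto.
Qed.

Lemma act_id_pos G P u : pwf pol P -> act G [] [(P, u)] (RP P u).
Proof.
  intros Hw. apply act_expand_pos; auto. intros st sw G' Dx Hi Hr.
  simpl. rewrite app_nil_r. apply act_rfoc; auto.
Qed.

Lemma act_id_neg G P u : pwf pol P -> act G [(NNeg P, u)] [] (RP P u).
Proof. intros. apply act_lfoc, l_negL, act_id_pos; auto. Qed.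

Lemma act_neg_hyp_active G D O R P u :
  pwf pol P -> act G ((NNeg P, u) :: D) O R -> act G D ((P, u) :: O) R.
Proof.
  intros Hw H. apply act_expand_pos; auto. intros st sw G' Dx Hi Hr.
  eapply act_sub_weaken in H; eauto. simpl in H.
  eapply act_cut; [ | exact H]. apply a_negR, act_rfoc; auto.
Qed.

Lemma act_stable_rfoc_map G D P u P' u' : act G D [] (RP P u) ->
  (forall st sw G' Dz, rfoc G' Dz (ppsub st sw P) (wsub sw u) ->
                       rfoc G' Dz (ppsub st sw P') (wsub sw u')) ->
  act G D [] (RP P' u').
Proof.
  intros H Hmap. rewrite <- (app_nil_r D). eapply act_stable_rcont; eauto.
  intros st sw G' Dz Hi Hr. simpl. rewrite app_nil_r. apply act_rfoc; auto.
Qed.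

Lemma act_stable_tensor G D1 D2 P1 P2 u : act G D1 [] (RP P1 u) -> act G D2 [] (RP P2 u) ->
  act G (D1 ++ D2) [] (RP (PTensor P1 P2) u).
Proof.
  intros H1 H2. eapply act_stable_rcont; eauto. intros st sw G' Dz Hi Hr.
  eapply act_sub_weaken in H2; eauto. simpl in H2.
  eapply a_perm; [apply Permutation_app_comm | apply Permutation_refl | ].
  eapply act_stable_rcont; eauto. intros st2 sw2 G'' Dy Hi2 Hr2.
  apply act_rfoc. eapply r_perm; [apply Permutation_app_comm | ]. cbn.
  apply r_tensorR; auto. apply (rfoc_sub st2 sw2) in Hr. eauto using rfoc_weaken.
Qed.

(* The active hypothesis
   is internalized as [F := (P at u) -o N], where [at] lets [P] keep its world [u] inside a
   formula at world [w], and [F] is then cut against [neg P @ u, F @ w ==> N @ w]. *)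
Lemma act_active_neg_hyp G D P u N w : pwf pol P -> nwf pol N ->
  act G D [(P, u)] (RN N w) -> act G ((NNeg P, u) :: D) [] (RN N w).
Proof.
  intros HP HN H.
  set (F := NLolli (PAt P u) N).
  assert (H1 : act G D [] (RN F w)) by (apply a_lolliR, a_atLA; auto).
  assert (H2 : act G [(NNeg P, u); (F, w)] [] (RN N w)).
  { apply act_expand_neg; auto. intros st sw G' Dx Q w' Hi Hl. simpl.
    assert (Hat : act G' [(NNeg (ppsub st sw P), wsub sw u)] []
                      (RP (PAt (ppsub st sw P) (wsub sw u)) (wsub sw w))).
    { eapply act_stable_rfoc_map; [apply act_id_neg, pwf_sub; auto | ].
      intros. apply r_atRF; auto. }
    eapply a_perm; [apply Permutation_middle | apply Permutation_refl | ].
    apply (act_stable_rcont (D := [_]) Hat).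
    intros st2 sw2 G'' Dz Hi2 Hr2. rewrite map_app, app_assoc.
    eapply a_perm; [apply Permutation_cons_append | apply Permutation_refl | ].
    apply a_lf; [discriminate | ]. cbn. apply l_lolliL; [exact Hr2 | ].
    apply (lfoc_sub st2 sw2) in Hl. eauto using lfoc_weaken. }
  eapply a_perm; [ | apply Permutation_refl | eapply act_cut; [exact H1 | ] ].
  - symmetry; apply Permutation_cons_append.
  - eapply a_perm; [apply perm_swap | apply Permutation_refl | exact H2].
Qed.

Lemma act_hyp_lfoc_map G D O R N1 u1 N u : nwf pol N1 ->
  (forall p ts, N <> NNeg (PAtom p ts)) ->
  (forall st sw G' Dx Q w, lfoc G' Dx (npsub st sw N1) (wsub sw u1) Q w ->
                           lfoc G' Dx (npsub st sw N) (wsub sw u) Q w) ->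
  act G ((N1, u1) :: D) O R -> act G ((N, u) :: D) O R.
Proof.
  intros Hw HN Hmap H. apply (act_cut (D1 := [_]) (N := N1) (u := u1)); [ | exact H].
  apply act_expand_neg; auto. intros st sw G' Dx Q w Hi Hl. simpl.
  eapply a_perm; [apply Permutation_cons_append | apply Permutation_refl | ].
  apply a_lf; auto using npsub_not_neg_atom.
Qed.

Lemma act_lolliL G D1 D2 P N u O R : nwf pol N -> act G D1 [] (RP P u) ->
  act G ((N, u) :: D2) O R -> act G ((NLolli P N, u) :: D1 ++ D2) O R.
Proof.
  intros Hw H1 H2. rewrite app_comm_cons.
  apply (act_cut (N := N) (u := u)); [ | exact H2].
  apply act_expand_neg; auto. intros st sw G' Dx Q w Hi Hl. simpl.
  set (L := (NLolli (ppsub st sw P) (npsub st sw N), wsub sw u)).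
  assert (HL : act G' (map (nhyp_sub st sw) D1 ++ Dx ++ [L]) [] (RP Q w)).
  { apply (act_stable_rcont (act_sub_weaken _ _ H1 Hi)).
    intros st2 sw2 G'' Dz Hi2 Hr2. rewrite map_app, app_assoc.
    eapply a_perm; [apply Permutation_cons_append | apply Permutation_refl | ].
    apply a_lf; [discriminate | ]. cbn. apply l_lolliL; [exact Hr2 | ].
    apply (lfoc_sub st2 sw2) in Hl. eauto using lfoc_weaken. }
  eapply a_perm; [ | apply Permutation_refl | exact HL].
  eapply Permutation_trans; [apply Permutation_app_comm | rewrite <- app_assoc; reflexivity].
Qed.

Lemma act_neg_pos_goal G D N w : act G D [] (RN N w) -> act G D [] (RN (NNeg (PPos N)) w).
Proof.
  intros H. apply a_negR. destruct N; try solve [apply a_rf; [discriminate | apply r_posR; auto]].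
  apply act_RN_inv in H. exact H.
Qed.

End Focused.

(** * Completeness of focusing *)

Section Completeness.
Context {CD : constraint_domain} {Fn Pr : Type}.
Variable pol : Pr -> bool.
Local Notation W := (wexp CD).
Local Notation PP := (pprop CD Fn Pr).
Local Notation NN := (nprop CD Fn Pr).
Local Notation nh := (nhyp CD Fn Pr).
Local Notation hy := (hyp CD Fn Pr).
Local Notation act := (act pol).
Implicit Types (G D : list hy) (Gm Dn : list nh) (A B C : prop CD Fn Pr)
  (N M : NN) (P Q : PP) (u v w : W).

Definition neg_pos_shift N : Prop := exists N', N = NNeg (PPos N').

Lemma neg_pos_shift_dec N : {N' | N = NNeg (PPos N')} + ~ neg_pos_shift N.
Proof.
  destruct N; try (right; intros [N' E]; discriminate).
  destruct P; try (right; intros [N' E]; discriminate). left; eauto.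
Qed.

(* A polarization may wrap any subformula in redundant shifts [neg (pos -)]; they are
   stripped off the succedent and the linear hypotheses before the case analysis. *)
Lemma act_goal_peel Gm Dn w A :
  (forall Cm, neg_polarization pol A Cm -> ~ neg_pos_shift Cm -> act Gm Dn [] (RN Cm w)) ->
  forall Cm, neg_polarization pol A Cm -> act Gm Dn [] (RN Cm w).
Proof.
  intros H Cm. induction Cm as [Cm IH] using (well_founded_induction
    (Wf_nat.well_founded_ltof _ (@nsize CD Fn Pr))). intros HC.
  destruct (neg_pos_shift_dec Cm) as [[N' ->] | Hn]; auto.
  apply act_neg_pos_goal, IH; [unfold Wf_nat.ltof; simpl; lia | ].
  destruct HC; split; auto.
Qed.

Lemma act_hyp_peel Gm Dn u A Cm w : nwf pol Cm ->
  (forall Nh, neg_polarization pol A Nh -> ~ neg_pos_shift Nh ->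
              act Gm ((Nh, u) :: Dn) [] (RN Cm w)) ->
  forall Nh, neg_polarization pol A Nh -> act Gm ((Nh, u) :: Dn) [] (RN Cm w).
Proof.
  intros HC H Nh. induction Nh as [Nh IH] using (well_founded_induction
    (Wf_nat.well_founded_ltof _ (@nsize CD Fn Pr))). intros HN.
  destruct (neg_pos_shift_dec Nh) as [[N' ->] | Hn]; auto.
  destruct HN as [Hw He]. apply act_active_neg_hyp, a_posL; auto.
  apply IH; [unfold Wf_nat.ltof; simpl; lia | split; auto].
Qed.

Definition neg_pol_hyp (h : hy) (h' : nh) : Prop :=
  snd h' = snd h /\ neg_polarization pol (fst h) (fst h').

Lemma neg_polarization_sub A N st sw : neg_polarization pol A N ->
  neg_polarization pol (psub st sw A) (npsub st sw N).
Proof. intros [Hw He]; split; [apply nwf_sub; auto | rewrite nerase_sub, He; auto]. Qed.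

Lemma neg_polarization_neg A P : pwf pol P -> perase P = A -> neg_polarization pol A (NNeg P).
Proof. split; auto. Qed.

Lemma Forall2_neg_pol_hyp_tshift G Gm :
  Forall2 neg_pol_hyp G Gm -> Forall2 neg_pol_hyp (tshift_ctx G) (ntshift_ctx Gm).
Proof.
  induction 1 as [ | h h' G Gm [E Hp]]; constructor; auto.
  split; auto. apply neg_polarization_sub; auto.
Qed.

Lemma Forall2_neg_pol_hyp_wshift G Gm :
  Forall2 neg_pol_hyp G Gm -> Forall2 neg_pol_hyp (wshift_ctx G) (nwshift_ctx Gm).
Proof.
  induction 1 as [ | h h' G Gm [E Hp]]; constructor; auto.
  split; simpl; [rewrite E; auto | apply neg_polarization_sub; auto].
Qed.

Lemma Forall2_neg_pol_hyp_In G Gm A u : Forall2 neg_pol_hyp G Gm -> In (A, u) G ->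
  exists N, In (N, u) Gm /\ neg_polarization pol A N.
Proof.
  induction 1 as [ | h [N u'] G Gm [E Hp] _ IH]; intros Hin; [contradiction | ].
  destruct Hin as [-> | Hin].
  - simpl in *; subst. exists N; split; [left | ]; auto.
  - destruct (IH Hin) as [N' [? ?]]. exists N'; split; [right | ]; auto.
Qed.

Lemma Forall2_neg_pol_hyp_cons_inv A u D Dn : Forall2 neg_pol_hyp ((A, u) :: D) Dn ->
  exists Nh Dn0, Dn = (Nh, u) :: Dn0 /\ neg_polarization pol A Nh /\ Forall2 neg_pol_hyp D Dn0.
Proof.
  intros H. inversion H as [ | ? [Nh u'] ? Dn0 [E Hp] HD]; simpl in *; subst; eauto.
Qed.

Lemma Forall2_neg_pol_hyp_cons A u N D Dn : neg_polarization pol A N ->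
  Forall2 neg_pol_hyp D Dn -> Forall2 neg_pol_hyp ((A, u) :: D) ((N, u) :: Dn).
Proof. constructor; [split | ]; auto. Qed.

Definition focused_derivable G D C w : Prop :=
  forall Gm Dn Cm, Forall2 neg_pol_hyp G Gm -> Forall2 neg_pol_hyp D Dn ->
    neg_polarization pol C Cm -> act Gm Dn [] (RN Cm w).

Lemma act_stable_focused_derivable G D Gm Dn A P w : focused_derivable G D A w ->
  Forall2 neg_pol_hyp G Gm -> Forall2 neg_pol_hyp D Dn -> pwf pol P -> perase P = A ->
  act Gm Dn [] (RP P w).
Proof.
  intros H HG HD Hw He. apply act_RN_inv with (N := NNeg P).
  apply H; auto. apply neg_polarization_neg; auto.
Qed.

Ltac polarization_cases X HX Hn :=
  let Hw := fresh "Hw" in let He := fresh "He" in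
  destruct HX as [Hw He]; destruct X as [ | | | | | | | | ?P0]; simpl in Hw, He;
  try discriminate;
  try (destruct P0; simpl in Hw, He; try discriminate;
       try (exfalso; apply Hn; eexists; reflexivity)).

Ltac goal_cases Cm HC :=
  revert Cm HC; apply act_goal_peel; let Hn := fresh "Hn" in intros Cm HC Hn;
  polarization_cases Cm HC Hn.

Ltac hyp_cases HD HC :=
  let Nh := fresh "Nh" in let Dn := fresh "Dn" in let HN := fresh "HN" in
  let HD' := fresh "HD" in let Hn := fresh "Hn" in
  destruct (Forall2_neg_pol_hyp_cons_inv HD) as [Nh [Dn [-> [HN HD']]]]; clear HD;
  revert Nh HN; apply act_hyp_peel; [destruct HC; auto | ]; intros Nh HN Hn;
  polarization_cases Nh HN Hn.

Lemma focused_derivable_perm G D D' C w :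
  Permutation D D' -> focused_derivable G D C w -> focused_derivable G D' C w.
Proof.
  intros Hp IH Gm Dn Cm HG HD HC.
  destruct (Permutation_Forall2 (Permutation_sym Hp) HD) as [Dn' [Hp' HD']].
  eapply a_perm; [symmetry; exact Hp' | apply Permutation_refl | eauto].
Qed.

Lemma focused_derivable_init G a ts u w :
  weq u w -> focused_derivable G [(Atom a ts, u)] (Atom a ts) w.
Proof.
  intros Hu Gm Dn Cm HG HD HC.
  destruct (Forall2_neg_pol_hyp_cons_inv HD) as [Nh [Dn0 [-> [HN HD0]]]]; clear HD.
  inversion HD0; subst.
  revert Cm HC. apply act_goal_peel. intros Cm HC HCn.
  revert Nh HN. apply act_hyp_peel; [destruct HC; auto | ]. intros Nh HN HNn.
  polarization_cases Cm HC HCn; polarization_cases Nh HN HNn;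
    injection He as -> ->; injection He0 as <- <-; try congruence.
  - apply a_rp, a_lf, l_li; auto; discriminate.
  - apply a_negR, a_rf, r_ri; auto; discriminate.
Qed.

Lemma focused_derivable_copy G D A u C w :
  In (A, u) G -> focused_derivable G ((A, u) :: D) C w -> focused_derivable G D C w.
Proof.
  intros Hin IH Gm Dn Cm HG HD HC.
  destruct (@Forall2_neg_pol_hyp_In G Gm A u HG Hin) as [N [HiN HN]].
  apply (act_cut (D1 := []) (N := N) (u := u)); [apply act_copy; auto; apply HN | ].
  apply IH; auto using Forall2_neg_pol_hyp_cons.
Qed.

Lemma focused_derivable_tensorR G D1 D2 A B w :
  focused_derivable G D1 A w -> focused_derivable G D2 B w ->
  focused_derivable G (D1 ++ D2) (Tensor A B) w.
Proof.
  intros IH1 IH2 Gm Dn Cm HG HD HC.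
  destruct (Forall2_app_inv_l _ _ HD) as [Dn1 [Dn2 [HD1 [HD2 ->]]]].
  goal_cases Cm HC. injection He as <- <-. destruct Hw.
  apply a_negR, act_stable_tensor;
    [eapply act_stable_focused_derivable with (1 := IH1) |
     eapply act_stable_focused_derivable with (1 := IH2)]; eauto.
Qed.

Lemma focused_derivable_tensorL G D A B u C w :
  focused_derivable G ((A, u) :: (B, u) :: D) C w ->
  focused_derivable G ((Tensor A B, u) :: D) C w.
Proof.
  intros IH Gm Dn Cm HG HD HC. hyp_cases HD HC. injection He as <- <-. destruct Hw.
  apply act_active_neg_hyp; [simpl; tauto | apply HC | ]. apply a_tensorL.
  apply act_neg_hyp_active, act_neg_hyp_active; auto.
  eapply a_perm; [apply perm_swap | apply Permutation_refl | ].
  apply IH; auto. repeat apply Forall2_neg_pol_hyp_cons; auto using neg_polarization_neg.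
Qed.

Lemma focused_derivable_oneR G w : focused_derivable G [] One w.
Proof.
  intros Gm Dn Cm HG HD HC. inversion HD; subst. goal_cases Cm HC.
  apply a_negR, a_rf; [discriminate | apply r_oneR].
Qed.

Lemma focused_derivable_oneL G D u C w :
  focused_derivable G D C w -> focused_derivable G ((One, u) :: D) C w.
Proof.
  intros IH Gm Dn Cm HG HD HC. hyp_cases HD HC.
  apply act_active_neg_hyp; [simpl; tauto | apply HC | ]. apply a_oneL; auto.
Qed.

Lemma focused_derivable_lolliR G D A B w :
  focused_derivable G ((A, w) :: D) B w -> focused_derivable G D (Lolli A B) w.
Proof.
  intros IH Gm Dn Cm HG HD HC. goal_cases Cm HC. injection He as <- <-. destruct Hw.
  apply a_lolliR, act_neg_hyp_active; auto.
  apply IH; auto using Forall2_neg_pol_hyp_cons, neg_polarization_neg. split; auto.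
Qed.

Lemma focused_derivable_lolliL G D1 D2 A B u C w :
  focused_derivable G D1 A u -> focused_derivable G ((B, u) :: D2) C w ->
  focused_derivable G ((Lolli A B, u) :: D1 ++ D2) C w.
Proof.
  intros IH1 IH2 Gm Dn Cm HG HD HC. hyp_cases HD HC. injection He as <- <-. destruct Hw.
  destruct (Forall2_app_inv_l _ _ HD0) as [Dn1 [Dn2 [HD1 [HD2 ->]]]].
  apply act_lolliL; auto.
  - eapply act_stable_focused_derivable; eauto.
  - apply IH2; auto. apply Forall2_neg_pol_hyp_cons; auto. split; auto.
Qed.

Lemma focused_derivable_withR G D A B w :
  focused_derivable G D A w -> focused_derivable G D B w -> focused_derivable G D (With A B) w.
Proof.
  intros IH1 IH2 Gm Dn Cm HG HD HC. goal_cases Cm HC. injection He as <- <-. destruct Hw.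
  apply a_withR; [apply IH1 | apply IH2]; auto; split; auto.
Qed.

Lemma focused_derivable_withL1 G D A B u C w :
  focused_derivable G ((A, u) :: D) C w -> focused_derivable G ((With A B, u) :: D) C w.
Proof.
  intros IH Gm Dn Cm HG HD HC. hyp_cases HD HC. injection He as <- <-. destruct Hw.
  apply (act_hyp_lfoc_map (N1 := Nh1) (u1 := u)); auto; [discriminate | | ].
  - intros. apply l_withL1; auto.
  - apply IH; auto. apply Forall2_neg_pol_hyp_cons; auto. split; auto.
Qed.

Lemma focused_derivable_withL2 G D A B u C w :
  focused_derivable G ((B, u) :: D) C w -> focused_derivable G ((With A B, u) :: D) C w.
Proof.
  intros IH Gm Dn Cm HG HD HC. hyp_cases HD HC. injection He as <- <-. destruct Hw.
  apply (act_hyp_lfoc_map (N1 := Nh2) (u1 := u)); auto; [discriminate | | ].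
  - intros. apply l_withL2; auto.
  - apply IH; auto. apply Forall2_neg_pol_hyp_cons; auto. split; auto.
Qed.

Lemma focused_derivable_topR G D w : focused_derivable G D Top w.
Proof. intros Gm Dn Cm HG HD HC. goal_cases Cm HC. apply a_topR. Qed.

Lemma focused_derivable_plusR1 G D A B w :
  focused_derivable G D A w -> focused_derivable G D (Plus A B) w.
Proof.
  intros IH Gm Dn Cm HG HD HC. goal_cases Cm HC. injection He as <- <-. destruct Hw.
  apply a_negR. apply (act_stable_rfoc_map (P := P0_1) (u := w)).
  - eapply act_stable_focused_derivable; eauto.
  - intros. apply r_plusR1; auto.
Qed.

Lemma focused_derivable_plusR2 G D A B w :
  focused_derivable G D B w -> focused_derivable G D (Plus A B) w.
Proof.
  intros IH Gm Dn Cm HG HD HC. goal_cases Cm HC. injection He as <- <-. destruct Hw.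
  apply a_negR. apply (act_stable_rfoc_map (P := P0_2) (u := w)).
  - eapply act_stable_focused_derivable; eauto.
  - intros. apply r_plusR2; auto.
Qed.

Lemma focused_derivable_plusL G D A B u C w :
  focused_derivable G ((A, u) :: D) C w -> focused_derivable G ((B, u) :: D) C w ->
  focused_derivable G ((Plus A B, u) :: D) C w.
Proof.
  intros IH1 IH2 Gm Dn Cm HG HD HC. hyp_cases HD HC. injection He as <- <-. destruct Hw.
  apply act_active_neg_hyp; [simpl; tauto | apply HC | ].
  apply a_plusL; apply act_neg_hyp_active; auto; [apply IH1 | apply IH2];
    auto using Forall2_neg_pol_hyp_cons, neg_polarization_neg.
Qed.

Lemma focused_derivable_zeroL G D u C w : focused_derivable G ((Zero, u) :: D) C w.
Proof.
  intros Gm Dn Cm HG HD HC. hyp_cases HD HC.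
  apply act_active_neg_hyp; [simpl; tauto | apply HC | apply a_zeroL].
Qed.

Lemma focused_derivable_bangR G A w :
  focused_derivable G [] A w -> focused_derivable G [] (Bang A) w.
Proof.
  intros IH Gm Dn Cm HG HD HC. inversion HD; subst. goal_cases Cm HC. injection He as <-.
  apply a_negR, a_rf, r_bangR; [discriminate | ]. apply IH; auto. split; auto.
Qed.

Lemma focused_derivable_bangL G D A u C w :
  focused_derivable ((A, u) :: G) D C w -> focused_derivable G ((Bang A, u) :: D) C w.
Proof.
  intros IH Gm Dn Cm HG HD HC. hyp_cases HD HC. injection He as <-.
  apply act_active_neg_hyp; [simpl; tauto | apply HC | ].
  apply a_bangL, IH; auto. apply Forall2_neg_pol_hyp_cons; auto. split; auto.
Qed.

Lemma focused_derivable_allTR G D A w :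
  focused_derivable (tshift_ctx G) (tshift_ctx D) A w -> focused_derivable G D (AllT A) w.
Proof.
  intros IH Gm Dn Cm HG HD HC. goal_cases Cm HC. injection He as <-.
  apply a_allTR, IH; auto using Forall2_neg_pol_hyp_tshift. split; auto.
Qed.

Lemma focused_derivable_allWR G D A w :
  focused_derivable (wshift_ctx G) (wshift_ctx D) A (wshift w) ->
  focused_derivable G D (AllW A) w.
Proof.
  intros IH Gm Dn Cm HG HD HC. goal_cases Cm HC. injection He as <-.
  apply a_allWR, IH; auto using Forall2_neg_pol_hyp_wshift. split; auto.
Qed.

Lemma focused_derivable_allTL G D A t u C w :
  focused_derivable G ((tinst t A, u) :: D) C w -> focused_derivable G ((AllT A, u) :: D) C w.
Proof.
  intros IH Gm Dn Cm HG HD HC. hyp_cases HD HC. injection He as <-.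
  apply (act_hyp_lfoc_map (N1 := ntinst t Nh) (u1 := u)); [apply nwf_sub; auto | discriminate | | ].
  - intros st sw G' Dx Q w0 Hl. cbn. apply l_allTL with (t := tsub st t).
    rewrite <- npsub_ntinst. exact Hl.
  - apply IH; auto. apply Forall2_neg_pol_hyp_cons; auto. apply neg_polarization_sub; split; auto.
Qed.

Lemma focused_derivable_allWL G D A v u C w :
  focused_derivable G ((winst v A, u) :: D) C w -> focused_derivable G ((AllW A, u) :: D) C w.
Proof.
  intros IH Gm Dn Cm HG HD HC. hyp_cases HD HC. injection He as <-.
  apply (act_hyp_lfoc_map (N1 := nwinst v Nh) (u1 := u)); [apply nwf_sub; auto | discriminate | | ].
  - intros st sw G' Dx Q w0 Hl. cbn. apply l_allWL with (v := wsub sw v).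
    rewrite <- npsub_nwinst. exact Hl.
  - apply IH; auto. apply Forall2_neg_pol_hyp_cons; auto. apply neg_polarization_sub; split; auto.
Qed.

Lemma focused_derivable_exTR G D A t w :
  focused_derivable G D (tinst t A) w -> focused_derivable G D (ExT A) w.
Proof.
  intros IH Gm Dn Cm HG HD HC. goal_cases Cm HC. injection He as <-.
  apply a_negR. apply (act_stable_rfoc_map (P := ptinst t P0) (u := w)).
  - eapply act_stable_focused_derivable; eauto using pwf_sub, perase_sub.
  - intros st sw G' Dz Hr. cbn. apply r_exTR with (t := tsub st t).
    rewrite <- ppsub_ptinst. exact Hr.
Qed.

Lemma focused_derivable_exWR G D A v w :
  focused_derivable G D (winst v A) w -> focused_derivable G D (ExW A) w.
Proof.
  intros IH Gm Dn Cm HG HD HC. goal_cases Cm HC. injection He as <-.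
  apply a_negR. apply (act_stable_rfoc_map (P := pwinst v P0) (u := w)).
  - eapply act_stable_focused_derivable; eauto using pwf_sub, perase_sub.
  - intros st sw G' Dz Hr. cbn. apply r_exWR with (v := wsub sw v).
    rewrite <- ppsub_pwinst. exact Hr.
Qed.

Lemma focused_derivable_exTL G D A u C w :
  focused_derivable (tshift_ctx G) ((A, u) :: tshift_ctx D) (tshift C) w ->
  focused_derivable G ((ExT A, u) :: D) C w.
Proof.
  intros IH Gm Dn Cm HG HD HC. hyp_cases HD HC. injection He as <-.
  apply act_active_neg_hyp; [simpl; tauto | apply HC | ].
  apply a_exTL, act_neg_hyp_active; auto.
  apply IH; [apply Forall2_neg_pol_hyp_tshift; auto | | apply neg_polarization_sub; auto].
  apply Forall2_neg_pol_hyp_cons; auto using Forall2_neg_pol_hyp_tshift, neg_polarization_neg.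
Qed.

Lemma focused_derivable_exWL G D A u C w :
  focused_derivable (wshift_ctx G) ((A, wshift u) :: wshift_ctx D) (wshiftp C) (wshift w) ->
  focused_derivable G ((ExW A, u) :: D) C w.
Proof.
  intros IH Gm Dn Cm HG HD HC. hyp_cases HD HC. injection He as <-.
  apply act_active_neg_hyp; [simpl; tauto | apply HC | ].
  apply a_exWL, act_neg_hyp_active; auto.
  apply IH; [apply Forall2_neg_pol_hyp_wshift; auto | | apply neg_polarization_sub; auto].
  apply Forall2_neg_pol_hyp_cons; auto using Forall2_neg_pol_hyp_wshift, neg_polarization_neg.
Qed.

Lemma focused_derivable_atR G D A u v :
  focused_derivable G D A u -> focused_derivable G D (At A u) v.
Proof.
  intros IH Gm Dn Cm HG HD HC. goal_cases Cm HC; injection He as <- ->.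
  - apply a_atRA, IH; auto. split; auto.
  - apply a_negR. apply (act_stable_rfoc_map (P := P0) (u := u)).
    + eapply act_stable_focused_derivable; eauto.
    + intros st sw G' Dz Hr. apply r_atRF. exact Hr.
Qed.

Lemma focused_derivable_atL G D A u v C w :
  focused_derivable G ((A, u) :: D) C w -> focused_derivable G ((At A u, v) :: D) C w.
Proof.
  intros IH Gm Dn Cm HG HD HC. hyp_cases HD HC; injection He as <- ->.
  - apply (act_hyp_lfoc_map (N1 := Nh) (u1 := u)); auto; [discriminate | | ].
    + intros st sw G' Dx Q w0 Hl. apply l_atLF. exact Hl.
    + apply IH; auto. apply Forall2_neg_pol_hyp_cons; auto. split; auto.
  - apply act_active_neg_hyp; [simpl; tauto | apply HC | ].
    apply a_atLA, act_neg_hyp_active; auto.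
    apply IH; auto using Forall2_neg_pol_hyp_cons, neg_polarization_neg.
Qed.

Lemma focused_derivable_downR G D A w :
  focused_derivable G D (winst w A) w -> focused_derivable G D (Down A) w.
Proof.
  intros IH Gm Dn Cm HG HD HC. goal_cases Cm HC; injection He as <-.
  - apply a_downRA, IH; auto. apply neg_polarization_sub; split; auto.
  - apply a_negR. apply (act_stable_rfoc_map (P := pwinst w P0) (u := w)).
    + eapply act_stable_focused_derivable; eauto using pwf_sub, perase_sub.
    + intros st sw G' Dz Hr. cbn. apply r_downRF. rewrite <- ppsub_pwinst. exact Hr.
Qed.

Lemma focused_derivable_downL G D A v C w :
  focused_derivable G ((winst v A, v) :: D) C w -> focused_derivable G ((Down A, v) :: D) C w.
Proof.
  intros IH Gm Dn Cm HG HD HC. hyp_cases HD HC; injection He as <-.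
  - apply (act_hyp_lfoc_map (N1 := nwinst v Nh) (u1 := v));
      [apply nwf_sub; auto | discriminate | | ].
    + intros st sw G' Dx Q w0 Hl. cbn. apply l_downLF. rewrite <- npsub_nwinst. exact Hl.
    + apply IH; auto. apply Forall2_neg_pol_hyp_cons; auto.
      apply neg_polarization_sub; split; auto.
  - apply act_active_neg_hyp; [simpl; tauto | apply HC | ].
    apply a_downLA, act_neg_hyp_active; [apply pwf_sub; auto | ].
    apply IH; auto. apply Forall2_neg_pol_hyp_cons; auto.
    apply neg_polarization_neg; [apply pwf_sub; auto | apply perase_sub].
Qed.

Lemma useq_focused_derivable G D C w : useq G D C w -> focused_derivable G D C w.
Proof.
  induction 1; eauto using focused_derivable_perm, focused_derivable_init,
    focused_derivable_copy, focused_derivable_tensorR, focused_derivable_tensorL,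
    focused_derivable_oneR, focused_derivable_oneL, focused_derivable_lolliR,
    focused_derivable_lolliL, focused_derivable_withR, focused_derivable_withL1,
    focused_derivable_withL2, focused_derivable_topR, focused_derivable_plusR1,
    focused_derivable_plusR2, focused_derivable_plusL, focused_derivable_zeroL,
    focused_derivable_bangR, focused_derivable_bangL, focused_derivable_allTR,
    focused_derivable_allWR, focused_derivable_allTL, focused_derivable_allWL,
    focused_derivable_exTR, focused_derivable_exWR, focused_derivable_exTL,
    focused_derivable_exWL, focused_derivable_atR, focused_derivable_atL,
    focused_derivable_downR, focused_derivable_downL.
Qed.

Lemma act_neg_hyps_active Gm Dn O R (Dp : list (phyp CD Fn Pr)) :
  Forall (fun h => pwf pol (fst h)) Dp ->
  act Gm (map (fun h => (NNeg (fst h), snd h)) Dp ++ Dn) O R -> act Gm Dn (Dp ++ O) R.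
Proof.
  revert Dn O; induction Dp as [ | [P u] Dp IH]; intros Dn O Hw H; auto.
  inversion Hw; subst. apply act_neg_hyp_active in H; auto.
  eapply a_perm; [apply Permutation_refl | symmetry; apply Permutation_middle | ]. auto.
Qed.

Lemma act_bang_hyps Gm' Gm O R :
  act (Gm' ++ Gm) [] O R -> act Gm [] (map (fun h => (PBang (fst h), snd h)) Gm' ++ O) R.
Proof.
  revert Gm; induction Gm' as [ | [N u] Gm' IH]; intros Gm H; auto.
  apply a_bangL, IH. eapply act_weaken; eauto.
  intros z; rewrite !in_app_iff; simpl; tauto.
Qed.

Lemma Forall2_pos_neg_pol_hyp D (Dp : list (phyp CD Fn Pr)) :
  Forall2 (fun h h' => snd h' = snd h /\ pos_polarization pol (fst h) (fst h')) D Dp ->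
  Forall2 neg_pol_hyp D (map (fun h => (NNeg (fst h), snd h)) Dp) /\
  Forall (fun h => pwf pol (fst h)) Dp.
Proof.
  induction 1 as [ | h h' D Dp [E [Hw He]] _ [IH1 IH2]]; split; constructor; auto.
  split; auto. apply neg_polarization_neg; auto.
Qed.

End Completeness.

Theorem mainTheorem8 (CD : constraint_domain) (Fn Pr : Type) (pol : Pr -> bool)
  (G D : list (hyp CD Fn Pr)) (C : prop CD Fn Pr) (w : wexp CD)
  (Gm : list (nhyp CD Fn Pr)) (Dp : list (phyp CD Fn Pr)) (Cm : nprop CD Fn Pr) :
  useq G D C w ->
  Forall2 (fun (h : hyp CD Fn Pr) (h' : nhyp CD Fn Pr) =>
             snd h' = snd h /\ neg_polarization pol (fst h) (fst h')) G Gm ->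
  Forall2 (fun (h : hyp CD Fn Pr) (h' : phyp CD Fn Pr) =>
             snd h' = snd h /\ pos_polarization pol (fst h) (fst h')) D Dp ->
  neg_polarization pol C Cm ->
  act pol [] [] (map (fun h : nhyp CD Fn Pr => (PBang (fst h), snd h)) Gm ++ Dp)
      (RN Cm w).
Proof.
  intros HU HG HD HC.
  destruct (Forall2_pos_neg_pol_hyp HD) as [HDn HDw].
  apply act_bang_hyps. rewrite app_nil_r.
  rewrite <- (app_nil_r Dp). apply act_neg_hyps_active; auto.
  rewrite app_nil_r. exact (useq_focused_derivable HU HG HDn HC).
Qed.
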